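(* Let $\mathbb{X}=\{1,2,3,\dots\}$, $\alpha>0$, and let $\mu\in\mathcal{P}(\mathbb{X})$ satisfy, for some constants $0<k_0\le k_1$ and some $N>0$, $k_0e^{-\alpha x}\le\mu(\{x\})\le k_1e^{-\alpha x}$ for all $x\ge N$. Let $\epsilon_n=n^{-\tau}$ with $\tau\in(0,1/2)$. Then $$|H(\mu)-H(\hat\mu_{n,\epsilon_n})|=O(n^{-\tau}\log n),\qquad\mathbb{P}_\mu\text{-a.s.}$$
   Context: For a probability $\mu$ on $\mathbb{X}$, $f_\mu(x)=\mu(\{x\})$, $A_\mu=\{x:f_\mu(x)>0\}$, and $H(\mu)=-\sum_{x\in A_\mu}f_\mu(x)\log f_\mu(x)$ ($\log$ to a fixed base $b>1$). Given i.i.d. $X_1,X_2,\dots\sim\mu$ with law $\mathbb{P}_\mu$, $\hat\mu_n(A)=\frac1n\sum_{k=1}^n\mathbb{1}_A(X_k)$ is the empirical measure. For $\epsilon>0$, $\Gamma_\epsilon=\{x\in\mathbb{X}:\hat\mu_n(\{x\})\ge\epsilon\}$ and $\hat\mu_{n,\epsilon}=\hat\mu_n(\cdot\mid\Gamma_\epsilon)$, i.e. $\hat\mu_{n,\epsilon}(A)=\hat\mu_n(A\cap\Gamma_\epsilon)/\hat\mu_n(\Gamma_\epsilon)$ (defined arbitrarily when $\Gamma_\epsilon=\emptyset$). *)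

From Stdlib Require Import Reals Classical ClassicalEpsilon.
Open Scope R_scope.

Definition logb (b x : R) : R := ln x / ln b.

Fixpoint fsum (n : nat) (u : nat -> R) : R :=
  match n with
  | O => 0
  | S m => fsum m u + u m
  end.

Fixpoint fprod (n : nat) (u : nat -> R) : R :=
  match n with
  | O => 1
  | S m => fprod m u * u m
  end.

(** Value of a series (the limit when it converges; arbitrary otherwise). *)
Definition series_value (u : nat -> R) : R :=
  epsilon (inhabits 0) (fun l => infinite_sum u l).

(** A probability on X = {1,2,3,...}, given by its mass function f(x) = mu({x}),
    encoded on nat with f 0 = 0. *)
Definition is_pmf_pos (f : nat -> R) : Prop :=
  f 0%nat = 0 /\ (forall x, 0 <= f x) /\ infinite_sum f 1.

Definition entropy (b : R) (f : nat -> R) : R :=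
  - series_value (fun x => if Rlt_dec 0 (f x) then f x * logb b (f x) else 0).

Definition is_sigma_algebra {Omega : Type} (F : (Omega -> Prop) -> Prop) : Prop :=
  F (fun _ => True) /\
  (forall E, F E -> F (fun w => ~ E w)) /\
  (forall E : nat -> Omega -> Prop, (forall n, F (E n)) -> F (fun w => exists n, E n w)).

Definition is_prob_space {Omega : Type} (F : (Omega -> Prop) -> Prop)
  (P : (Omega -> Prop) -> R) : Prop :=
  is_sigma_algebra F /\
  (forall E, F E -> 0 <= P E) /\
  P (fun _ => True) = 1 /\
  (forall E : nat -> Omega -> Prop,
     (forall n, F (E n)) ->
     (forall n m w, n <> m -> E n w -> E m w -> False) ->
     infinite_sum (fun n => P (E n)) (P (fun w => exists n, E n w))).

(** X_1, X_2, ... (indexed here from 0) are i.i.d. with law f: each {X_k = x}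
    is an event, and for every n the joint law of (X_0,...,X_{n-1}) is the
    product law. *)
Definition iid_with_law {Omega : Type} (F : (Omega -> Prop) -> Prop)
  (P : (Omega -> Prop) -> R) (X : nat -> Omega -> nat) (f : nat -> R) : Prop :=
  (forall k x, F (fun w => X k w = x)) /\
  (forall (n : nat) (xs : nat -> nat),
     P (fun w => forall k, (k < n)%nat -> X k w = xs k) =
     fprod n (fun k => f (xs k))).

Definition indic {T : Type} (A : T -> Prop) (y : T) : R :=
  if excluded_middle_informative (A y) then 1 else 0.

Definition emp {Omega : Type} (X : nat -> Omega -> nat) (n : nat) (w : Omega)
  (A : nat -> Prop) : R :=
  / INR n * fsum n (fun k => indic A (X k w)).

Definition Gamma {Omega : Type} (X : nat -> Omega -> nat) (n : nat) (w : Omega)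
  (eps : R) (x : nat) : Prop :=
  emp X n w (fun y => y = x) >= eps.

(** Mass function of hat mu_{n,eps} = hat mu_n( . | Gamma_eps). *)
Definition emp_cond_pmf {Omega : Type} (X : nat -> Omega -> nat) (n : nat)
  (w : Omega) (eps : R) (x : nat) : R :=
  emp X n w (fun y => y = x /\ Gamma X n w eps y) / emp X n w (Gamma X n w eps).

(** Fix an exponent [tau < tau' < 1/2] and put [eps = n^-tau], [t = n^-tau'].
    The estimate is split into a deterministic and a probabilistic part.

    Deterministic: call the sample good when every atom below a cutoff
    [M ~ (tau ln n + c) / alpha] and the whole tail beyond [M] have empirical
    frequencies within [t] of their true masses.  Since [(M + 1) t <= eps],
    the empirical law is then [2 eps]-close to [mu] in l1 and [Gamma_eps] has
    mass [1 - O(eps)].  On atoms of mass at least [eps/2] the map [x ln x] is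
    [O(ln (1/eps))]-Lipschitz, while the atoms of mass below [2 eps] contribute
    [O(eps ln (1/eps))]: by the exponential tail all but finitely many of them
    lie beyond an index of order [ln (1/eps)], past which the masses decay
    geometrically.  Altogether [|H(mu) - H(mu_{n,eps})| = O(eps ln (1/eps))
    = O(n^-tau log n)].

    Probabilistic: a Chernoff bound shows that each of the [M + 1] frequencies
    deviates by more than [t] with probability at most [2 exp (- n t^2 / 8)],
    and [n t^2 = n^(1 - 2 tau')] grows polynomially, so the bad events have
    probability [O(1 / n^2)] and Borel-Cantelli concludes. *)

From Stdlib Require Import Reals Classical ClassicalEpsilon.
From Stdlib Require Import Lra Lia ZArith FunctionalExtensionality PropExtensionality.
Open Scope R_scope.

Lemma exp_le_mono x y : x <= y -> exp x <= exp y.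
Proof. intros [H|H]; [left; apply exp_increasing; auto | subst; lra]. Qed.

Lemma ln_le_mono x y : 0 < x -> x <= y -> ln x <= ln y.
Proof. intros Hx [H|H]; [left; apply ln_increasing; auto | subst; lra]. Qed.

Lemma ln_le_sub1 x : 0 < x -> ln x <= x - 1.
Proof. intros Hx. pose proof (exp_ineq1_le (ln x)). rewrite exp_ln in H; lra. Qed.

Lemma ln_le0 t : 0 < t -> t <= 1 -> ln t <= 0.
Proof. intros. rewrite <- ln_1. apply ln_le_mono; lra. Qed.

Lemma ln2_gt0 : 0 < ln 2.
Proof. rewrite <- ln_1. apply ln_increasing; lra. Qed.

Lemma inv_exp1_lt1 : / exp 1 < 1.
Proof.
 assert (He1 : 1 < exp 1) by (pose proof (exp_ineq1 1 ltac:(lra)); lra).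
 apply (Rmult_lt_reg_l (exp 1)); [lra|]. rewrite Rinv_r by lra. lra.
Qed.

Lemma opp_ln_small_gt0 eps : 0 < eps -> 2 * eps <= / exp 1 -> 0 < - ln eps.
Proof.
 intros. pose proof inv_exp1_lt1.
 assert (ln eps < 0); [|lra]. rewrite <- ln_1. apply ln_increasing; lra.
Qed.

Lemma Rabs_le_between x a : Rabs x <= a -> - a <= x <= a.
Proof. unfold Rabs; destruct Rcase_abs; intros; lra. Qed.

Lemma exp_mult_nat n y : exp (INR n * y) = exp y ^ n.
Proof.
 induction n; [simpl; rewrite Rmult_0_l, exp_0; auto|].
 rewrite S_INR, <- tech_pow_Rmult, <- IHn, <- exp_plus. f_equal; ring.
Qed.

Lemma pow_le_exp y n : 0 <= 1 + y -> (1 + y) ^ n <= exp (INR n * y).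
Proof. intros H. rewrite exp_mult_nat. apply pow_incr. split; auto. apply exp_ineq1_le. Qed.

Lemma exp_le_quadratic l : 0 <= l <= 1/2 -> exp l <= 1 + l + 2 * l ^ 2.
Proof.
 intros Hl. pose proof (exp_ineq1_le (- l)). rewrite exp_Ropp in H.
 assert (Hp : 0 < exp l) by apply exp_pos.
 assert (exp l * (1 - l) <= 1).
 { apply (Rmult_le_compat_l (exp l)) in H; [|lra]. rewrite Rinv_r in H; lra. }
 assert (1 <= (1 - l) * (1 + l + 2 * l ^ 2)) by nra. nra.
Qed.

Lemma exp_opp_le_quadratic l : 0 <= l -> exp (- l) <= 1 - l + l ^ 2.
Proof.
 intros Hl. pose proof (exp_ineq1_le l). rewrite exp_Ropp.
 assert (Hp : 0 < exp l) by apply exp_pos.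
 apply (Rmult_le_reg_l (exp l)); auto. rewrite Rinv_r by lra.
 assert (1 <= (1 + l) * (1 - l + l ^ 2)) by nra. nra.
Qed.

Lemma exp_opp_le_pow y k : 0 < y -> (1 <= k)%nat -> exp (- y / 8) <= (8 * INR k / y) ^ k.
Proof.
 intros Hy Hk. assert (HkR : 1 <= INR k) by (apply (le_INR 1); auto).
 assert (H0 : 0 < y / (8 * INR k)) by (apply Rdiv_lt_0_compat; lra).
 assert (H2 : (y / (8 * INR k)) ^ k <= exp (y / 8)).
 { replace (y / 8) with (INR k * (y / (8 * INR k))) by (field; lra).
   rewrite exp_mult_nat. apply pow_incr. pose proof (exp_ineq1_le (y / (8 * INR k))). lra. }
 assert (H3 : 0 < (y / (8 * INR k)) ^ k) by (apply pow_lt; auto).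
 replace (- y / 8) with (- (y / 8)) by field. rewrite exp_Ropp.
 replace (8 * INR k / y) with (/ (y / (8 * INR k))) by (field; lra). rewrite pow_inv.
 apply Rinv_le_contravar; auto.
Qed.

Lemma linear_le_exp d a0 a1 : 0 < d -> 0 <= a0 -> 0 <= a1 ->
  exists U, 0 <= U /\ forall u, U <= u -> a0 + a1 * u <= exp (d * u).
Proof.
 intros Hd Ha0 Ha1. exists (1 + 4 * (a0 + a1) / d ^ 2).
 assert (Hd2 : 0 < d ^ 2) by (apply pow_lt; lra).
 assert (0 <= 4 * (a0 + a1) / d ^ 2) by (apply Rmult_le_pos; [lra|left; apply Rinv_0_lt_compat; lra]).
 split; [lra|]. intros u Hu.
 replace (d * u) with (d * u / 2 + d * u / 2) by field. rewrite exp_plus.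
 pose proof (exp_ineq1_le (d * u / 2)). assert (0 <= d * u / 2) by (apply Rmult_le_pos; [nra|lra]).
 assert (H4 : 4 * (a0 + a1) <= d ^ 2 * u).
 { assert (Hq : 4 * (a0 + a1) / d ^ 2 <= u) by lra. apply (Rmult_le_compat_l (d ^ 2)) in Hq; [|lra].
   replace (d ^ 2 * (4 * (a0 + a1) / d ^ 2)) with (4 * (a0 + a1)) in Hq by (field; lra). lra. }
 assert (a0 + a1 * u <= (a0 + a1) * u) by nra.
 assert ((a0 + a1) * u * 4 <= d ^ 2 * u * u) by nra.
 nra.
Qed.

Lemma up_nat_bounds y : 0 <= y -> y <= INR (Z.to_nat (up y)) <= y + 1.
Proof.
 intros Hy. destruct (archimed y) as [H1 H2].
 assert (Hz : (0 <= up y)%Z) by (apply le_IZR; lra).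
 rewrite INR_IZR_INZ, Z2Nat.id by auto. lra.
Qed.

Lemma nat_gt m1 a : exists m, (m1 <= m)%nat /\ a < INR m.
Proof.
 destruct (Rle_or_lt 0 a) as [Ha|Ha].
 - exists (max m1 (Z.to_nat (up a)) + 1)%nat. split; [lia|].
   pose proof (up_nat_bounds a Ha).
   assert (INR (Z.to_nat (up a)) <= INR (max m1 (Z.to_nat (up a)))) by (apply le_INR; lia).
   rewrite plus_INR. simpl (INR 1). lra.
 - exists m1. split; [lia|]. pose proof (pos_INR m1). lra.
Qed.

Lemma eventually_ln_ge U : exists n2, (1 <= n2)%nat /\ forall n, (n2 <= n)%nat -> U <= ln (INR n).
Proof.
 destruct (nat_gt 1 (exp U)) as [m [Hm1 Hm]]. exists m. split; auto. intros n Hn.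
 assert (HnR : INR m <= INR n) by (apply le_INR; auto).
 rewrite <- (ln_exp U). apply ln_le_mono; [apply exp_pos|lra].
Qed.

Lemma ex_least (Q : nat -> Prop) : (exists n, Q n) -> exists n, Q n /\ forall k, (k < n)%nat -> ~ Q k.
Proof.
 intros [n Hn]. revert Hn.
 induction n as [n IH] using (well_founded_induction Wf_nat.lt_wf). intros Hn.
 destruct (classic (exists k, (k < n)%nat /\ Q k)) as [[k [Hk1 Hk2]]|Hno].
 - apply (IH k Hk1 Hk2).
 - exists n; split; auto. intros k Hk HQ; apply Hno; eauto.
Qed.

Lemma pred_ext {T} (A B : T -> Prop) : (forall w, A w <-> B w) -> A = B.
Proof. intros H; apply functional_extensionality; intros w; apply propositional_extensionality; auto. Qed.

Lemma fsum_ext n u v : (forall k, (k < n)%nat -> u k = v k) -> fsum n u = fsum n v.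
Proof. induction n; simpl; intros H; auto. rewrite IHn, H; auto; intros; apply H; lia. Qed.

Lemma fsum_plus n u v : fsum n (fun k => u k + v k) = fsum n u + fsum n v.
Proof. induction n; simpl; [lra|rewrite IHn; lra]. Qed.

Lemma fsum_minus n u v : fsum n (fun k => u k - v k) = fsum n u - fsum n v.
Proof. induction n; simpl; [lra|rewrite IHn; lra]. Qed.

Lemma fsum_scal n c u : fsum n (fun k => c * u k) = c * fsum n u.
Proof. induction n; simpl; [lra|rewrite IHn; lra]. Qed.

Lemma fsum_le n u v : (forall k, (k < n)%nat -> u k <= v k) -> fsum n u <= fsum n v.
Proof.
 induction n; simpl; intros H; [lra|]. pose proof (H n ltac:(lia)).
 assert (fsum n u <= fsum n v) by (apply IHn; intros; apply H; lia). lra.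
Qed.

Lemma fsum_const n c : fsum n (fun _ => c) = INR n * c.
Proof. induction n; simpl fsum; [simpl; lra|rewrite IHn, S_INR; lra]. Qed.

Lemma fsum_ge0 n u : (forall k, (k < n)%nat -> 0 <= u k) -> 0 <= fsum n u.
Proof. intros H. rewrite <- (Rmult_0_r (INR n)), <- fsum_const. apply fsum_le; auto. Qed.

Lemma fsum_abs n u : Rabs (fsum n u) <= fsum n (fun k => Rabs (u k)).
Proof.
 induction n; simpl; [rewrite Rabs_R0; lra|].
 eapply Rle_trans; [apply Rabs_triang|]. lra.
Qed.

Lemma fsum_shift n u : fsum (S n) u = u O + fsum n (fun k => u (S k)).
Proof. induction n; simpl in *; [lra|]. rewrite IHn. lra. Qed.

Lemma fsum_le_fsum_ge0 m n u : (m <= n)%nat -> (forall k, 0 <= u k) -> fsum m u <= fsum n u.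
Proof. intros H Hu; induction H; [lra|simpl; pose proof (Hu m0); lra]. Qed.

Lemma fsum_exchange n m (g : nat -> nat -> R) :
  fsum n (fun i => fsum m (fun j => g i j)) = fsum m (fun j => fsum n (fun i => g i j)).
Proof.
 induction n; simpl.
 - induction m; simpl; [lra| rewrite <- IHm; lra].
 - rewrite IHn, <- fsum_plus. reflexivity.
Qed.

Lemma fsum_split m k u : fsum (m + k) u = fsum m u + fsum k (fun j => u (m + j)%nat).
Proof.
 induction k; simpl.
 - rewrite Nat.add_0_r; lra.
 - rewrite Nat.add_succ_r; simpl; rewrite IHk; lra.
Qed.

Lemma fsum_cond_lt N0 K c : 0 <= c -> fsum K (fun x => if lt_dec x N0 then c else 0) <= INR N0 * c.
Proof.
 intros Hc. destruct (le_lt_dec K N0) as [HK|HK].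
 - eapply Rle_trans. apply (fsum_le _ _ (fun _ => c)). intros; destruct lt_dec; lra.
   rewrite fsum_const. apply Rmult_le_compat_r; auto. apply le_INR; auto.
 - replace K with (N0 + (K - N0))%nat by lia. rewrite fsum_split.
   rewrite (fsum_ext N0 _ (fun _ => c)), fsum_const. 2:{ intros; destruct lt_dec; lia || auto. }
   rewrite (fsum_ext (K - N0) _ (fun _ => 0)), fsum_const. lra. intros; destruct lt_dec; lia || auto.
Qed.

Lemma fsum_cond_ge m K (g : nat -> R) B : (forall x, 0 <= g x) ->
  (forall J, fsum J (fun j => g (m + j)%nat) <= B) -> fsum K (fun x => if le_dec m x then g x else 0) <= B.
Proof.
 intros Hg HB. assert (HB0 : 0 <= B) by (specialize (HB O); simpl in HB; lra).
 destruct (le_lt_dec K m) as [HK|HK].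
 - rewrite (fsum_ext K _ (fun _ => 0)), fsum_const; [lra|]. intros; destruct le_dec; lia || auto.
 - replace K with (m + (K - m))%nat by lia. rewrite fsum_split.
   rewrite (fsum_ext m _ (fun _ => 0)), fsum_const. 2:{ intros; destruct le_dec; lia || auto. }
   rewrite (fsum_ext (K - m) _ (fun j => g (m + j)%nat)). specialize (HB (K - m)%nat); lra.
   intros; destruct le_dec; lia || auto.
Qed.

Lemma fsum_geom_le r J : 0 <= r < 1 -> fsum J (fun j => r ^ j) <= / (1 - r).
Proof.
 intros Hr. assert (Heq : fsum J (fun j => r ^ j) * (1 - r) = 1 - r ^ J).
 { induction J; simpl fsum; [simpl; ring|]. rewrite Rmult_plus_distr_r, IHJ. simpl; ring. }
 pose proof (pow_le r J ltac:(lra)).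
 apply (Rmult_le_reg_r (1 - r)); [lra|]. rewrite Rinv_l by lra. lra.
Qed.

Lemma fsum_arith_geom_le r J : 0 <= r < 1 -> fsum J (fun j => INR j * r ^ j) <= r / (1 - r) ^ 2.
Proof.
 intros Hr.
 assert (Heq : fsum J (fun j => INR j * r ^ j) * (1 - r) ^ 2 = r - INR J * r ^ J + (INR J - 1) * r ^ (S J)).
 { induction J; simpl fsum; [simpl; ring|]. rewrite Rmult_plus_distr_r, IHJ, S_INR. simpl; ring. }
 pose proof (pow_le r J ltac:(lra)). pose proof (pos_INR J).
 assert (Hq : 0 < (1 - r) ^ 2) by (apply pow_lt; lra).
 apply (Rmult_le_reg_r ((1 - r) ^ 2)); auto. unfold Rdiv; rewrite Rmult_assoc, Rinv_l by lra.
 rewrite Heq. simpl pow. assert (- INR J + (INR J - 1) * r <= 0) by nra.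
 assert (r ^ J * (- INR J + (INR J - 1) * r) <= 0) by nra. nra.
Qed.

Lemma fsum_telescope_inv m J : (1 <= m)%nat ->
  fsum J (fun j => / (INR (m + j) * INR (m + j + 1))) = / INR m - / INR (m + J).
Proof.
 intros Hm. assert (HmR : 1 <= INR m) by (apply (le_INR 1); auto). induction J.
 - simpl. rewrite Nat.add_0_r; ring.
 - simpl fsum. rewrite IHJ. replace (m + S J)%nat with (m + J + 1)%nat by lia.
   assert (Ha : 1 <= INR (m + J)) by (apply (le_INR 1); lia). rewrite (plus_INR (m + J) 1). simpl (INR 1).
   field. lra.
Qed.

Lemma fprod_ext n u v : (forall k, (k < n)%nat -> u k = v k) -> fprod n u = fprod n v.
Proof. induction n; simpl; intros H; auto. rewrite IHn, H; auto; intros; apply H; lia. Qed.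

(** [infinite_sum] indexes partial sums by their last term ([sum_f_R0 u N]);
    [has_sum] indexes them by their length, as [fsum] does. *)
Definition has_sum (u : nat -> R) (l : R) := Un_cv (fun K => fsum K u) l.

Lemma fsum_S_sum_f_R0 u N : fsum (S N) u = sum_f_R0 u N.
Proof. induction N; simpl in *; [lra|rewrite IHN; lra]. Qed.

Lemma infinite_sum_has_sum u l : infinite_sum u l <-> has_sum u l.
Proof.
 unfold infinite_sum, has_sum, Un_cv, Rdist; split; intros H e He; destruct (H e He) as [N HN].
 - exists (S N); intros n Hn. destruct n; [lia|]. rewrite fsum_S_sum_f_R0. apply HN; lia.
 - exists N; intros n Hn. rewrite <- fsum_S_sum_f_R0. apply HN; lia.
Qed.

Lemma series_value_has_sum u l : has_sum u l -> series_value u = l.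
Proof.
 intros H. apply infinite_sum_has_sum in H. unfold series_value.
 eapply uniqueness_sum; [apply epsilon_spec; exists l; exact H| exact H].
Qed.

Lemma has_sum_unique u l m : has_sum u l -> has_sum u m -> l = m.
Proof. intros. eapply UL_sequence; eauto. Qed.

Lemma has_sum_le u v l m : has_sum u l -> has_sum v m -> (forall k, u k <= v k) -> l <= m.
Proof. intros Hu Hv H. eapply Rle_cv_lim; [|exact Hu|exact Hv]. intros; apply fsum_le; auto. Qed.

Lemma has_sum_ub u l B : has_sum u l -> (forall K, fsum K u <= B) -> l <= B.
Proof.
 intros Hu H. eapply Rle_cv_lim; [|exact Hu|].
 2:{ intros e He; exists O; intros; unfold Rdist; rewrite Rminus_diag, Rabs_R0; lra. }
 intros; simpl; auto.
Qed.

Lemma has_sum_scal u l c : has_sum u l -> has_sum (fun k => c * u k) (c * l).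
Proof.
 intros H. unfold has_sum. eapply Un_cv_ext.
 2:{ apply (CV_mult (fun _ => c) (fun K => fsum K u)); [|exact H].
     intros e He; exists O; intros; unfold Rdist; rewrite Rminus_diag, Rabs_R0; lra. }
 intros; simpl; rewrite fsum_scal; auto.
Qed.

Lemma has_sum_plus u v l m : has_sum u l -> has_sum v m -> has_sum (fun k => u k + v k) (l + m).
Proof.
 intros Hu Hv. unfold has_sum. eapply Un_cv_ext; [|apply (CV_plus _ _ _ _ Hu Hv)].
 intros; simpl; rewrite fsum_plus; auto.
Qed.

Lemma has_sum_minus u v l m : has_sum u l -> has_sum v m -> has_sum (fun k => u k - v k) (l - m).
Proof.
 intros Hu Hv. unfold has_sum. eapply Un_cv_ext; [|apply (CV_minus _ _ _ _ Hu Hv)].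
 intros; simpl; rewrite fsum_minus; auto.
Qed.

Lemma has_sum_ext u v l : (forall k, u k = v k) -> has_sum u l -> has_sum v l.
Proof. intros H Hu. unfold has_sum. eapply Un_cv_ext; [|exact Hu]. intros; apply fsum_ext; auto. Qed.

Lemma fsum_le_has_sum u l K : (forall k, 0 <= u k) -> has_sum u l -> fsum K u <= l.
Proof.
 intros Hu H. destruct (Rle_or_lt (fsum K u) l) as [|Hlt]; auto.
 destruct (H (fsum K u - l) ltac:(lra)) as [N HN].
 specialize (HN (max N K) ltac:(lia)). unfold Rdist in HN.
 pose proof (fsum_le_fsum_ge0 K (max N K) u ltac:(lia) Hu). apply Rabs_def2 in HN. lra.
Qed.

Lemma has_sum_bounded_ge0 u B : (forall k, 0 <= u k) -> (forall K, fsum K u <= B) ->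
  exists l, has_sum u l /\ l <= B.
Proof.
 intros Hu HB. destruct (growing_cv (fun K => fsum K u)) as [l Hl].
 - intros n; simpl; pose proof (Hu n); lra.
 - exists B; intros x [K ->]; auto.
 - exists l; split; auto. eapply has_sum_ub; eauto.
Qed.

Lemma has_sum_finite u K0 : (forall k, (K0 <= k)%nat -> u k = 0) -> has_sum u (fsum K0 u).
Proof.
 intros H e He; exists K0; intros n Hn. unfold Rdist.
 replace (fsum n u) with (fsum K0 u); [rewrite Rminus_diag, Rabs_R0; lra|].
 replace n with (K0 + (n - K0))%nat by lia. rewrite fsum_split.
 rewrite (fsum_ext (n - K0) (fun j => u (K0 + j)%nat) (fun _ => 0)), fsum_const; [lra|].
 intros; apply H; lia.
Qed.

Lemma has_sum_0 : has_sum (fun _ => 0) 0.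
Proof. apply (has_sum_finite (fun _ => 0) 0); auto. Qed.

Lemma indic_ext {T} (A B : T -> Prop) y : (A y <-> B y) -> indic A y = indic B y.
Proof. intros H. unfold indic; do 2 destruct excluded_middle_informative; tauto. Qed.

Lemma indic_true {T} (A : T -> Prop) y : A y -> indic A y = 1.
Proof. unfold indic; destruct excluded_middle_informative; tauto. Qed.

Lemma indic_false {T} (A : T -> Prop) y : ~ A y -> indic A y = 0.
Proof. unfold indic; destruct excluded_middle_informative; tauto. Qed.

Lemma indic_01 {T} (A : T -> Prop) y : indic A y = 0 \/ indic A y = 1.
Proof. unfold indic; destruct excluded_middle_informative; auto. Qed.

Lemma indic_bounds {T} (A : T -> Prop) y : 0 <= indic A y <= 1.
Proof. destruct (indic_01 A y) as [-> | ->]; lra. Qed.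

Lemma has_sum_indic_point f x : has_sum (fun y => f y * indic (fun z => z = x) y) (f x).
Proof.
 replace (f x) with (fsum (S x) (fun y => f y * indic (fun z => z = x) y)).
 - apply has_sum_finite. intros k Hk. rewrite indic_false by lia. ring.
 - simpl fsum. rewrite (fsum_ext x _ (fun _ => 0)).
   + rewrite fsum_const, indic_true by auto. ring.
   + intros k Hk; rewrite indic_false by lia; ring.
Qed.

Definition consn (x : nat) (ys : nat -> nat) : nat -> nat :=
  fun k => match k with O => x | S k' => ys k' end.

(** [prod_law f m Rp] is the mass that the product law [f^m] gives to the
    sequences [ys] (only [ys 0, ..., ys (m-1)] matter) satisfying [Rp]. *)
Fixpoint prod_law (f : nat -> R) (m : nat) (Rp : (nat -> nat) -> Prop) : R :=
  match m with
  | O => indic Rp (fun _ => 0%nat)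
  | S m' => series_value (fun x => f x * prod_law f m' (fun ys => Rp (consn x ys)))
  end.

Lemma prod_law_ext f m (R1 R2 : (nat -> nat) -> Prop) :
  (forall ys, R1 ys <-> R2 ys) -> prod_law f m R1 = prod_law f m R2.
Proof. intros H; rewrite (pred_ext R1 R2 H); auto. Qed.

Definition upd (xs : nat -> nat) (n x : nat) : nat -> nat := fun k => if Nat.eqb k n then x else xs k.

Definition count_in (A : nat -> Prop) m (ys : nat -> nat) := fsum m (fun k => indic A (ys k)).

Lemma count_in_consn A m x ys : count_in A (S m) (consn x ys) = indic A x + count_in A m ys.
Proof. unfold count_in. rewrite fsum_shift. reflexivity. Qed.

Definition xlnx (t : R) : R := if Rlt_dec 0 t then t * ln t else 0.

Lemma xlnx_0 : xlnx 0 = 0.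
Proof. unfold xlnx; destruct Rlt_dec; lra. Qed.

Lemma xlnx_pos t : 0 < t -> xlnx t = t * ln t.
Proof. unfold xlnx; destruct Rlt_dec; lra. Qed.

Lemma xlnx_le0 t : 0 <= t <= 1 -> xlnx t <= 0.
Proof.
 intros [H0 H1]. destruct H0 as [H0|<-]; [|rewrite xlnx_0; lra].
 rewrite xlnx_pos by auto. pose proof (ln_le0 t H0 H1). nra.
Qed.

Lemma xlnx_increment a b : 0 < a -> a <= b ->
  (b - a) * ln b <= xlnx b - xlnx a <= (b - a) * (ln b + 1).
Proof.
 intros Ha Hab. rewrite !xlnx_pos by lra.
 assert (H1 : 0 <= ln b - ln a) by (pose proof (ln_le_mono a b Ha Hab); lra).
 assert (H2 : ln b - ln a <= b / a - 1).
 { replace (ln b - ln a) with (ln (b / a)).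
   - apply ln_le_sub1. apply Rdiv_lt_0_compat; lra.
   - unfold Rdiv; rewrite ln_mult, ln_Rinv; try lra. apply Rinv_0_lt_compat; lra. }
 assert (H3 : a * (ln b - ln a) <= b - a).
 { apply (Rmult_le_compat_l a) in H2; [|lra]. replace (a * (b / a - 1)) with (b - a) in H2 by (field; lra). lra. }
 split; nra.
Qed.

Lemma xlnx_lipschitz m a b : 0 < m -> m <= a <= 1 -> m <= b <= 1 ->
  Rabs (xlnx a - xlnx b) <= Rabs (a - b) * (1 + - ln m).
Proof.
 intros Hm Ha Hb. assert (Hlm : ln m <= 0) by (apply ln_le0; lra).
 destruct (Rle_or_lt a b) as [Hab|Hab].
 - pose proof (xlnx_increment a b ltac:(lra) Hab). pose proof (ln_le_mono m b Hm ltac:(lra)).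
   pose proof (ln_le0 b ltac:(lra) ltac:(lra)).
   rewrite (Rabs_left1 (a - b)) by lra. apply Rabs_le. split; nra.
 - pose proof (xlnx_increment b a ltac:(lra) ltac:(lra)). pose proof (ln_le_mono m a Hm ltac:(lra)).
   pose proof (ln_le0 a ltac:(lra) ltac:(lra)).
   rewrite (Rabs_right (a - b)) by lra. apply Rabs_le. split; nra.
Qed.

Lemma xlnx_antitone a b : 0 <= a -> a <= b -> b <= / exp 1 -> xlnx b <= xlnx a.
Proof.
 intros Ha Hab Hb. assert (Hb0 : 0 < / exp 1) by (apply Rinv_0_lt_compat, exp_pos).
 assert (Hlb : 0 < b -> ln b <= -1).
 { intros. replace (-1) with (ln (/ exp 1)) by (rewrite ln_Rinv, ln_exp; [ring| apply exp_pos]).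
   apply ln_le_mono; auto. }
 destruct Ha as [Ha|<-].
 - pose proof (xlnx_increment a b Ha Hab). specialize (Hlb ltac:(lra)). nra.
 - rewrite xlnx_0. destruct (Req_dec b 0) as [->|Hb0']; [rewrite xlnx_0; lra|].
   rewrite xlnx_pos by lra. specialize (Hlb ltac:(lra)). nra.
Qed.

Lemma opp_xlnx_le u eps : 0 < eps -> eps <= u <= 1 -> - xlnx u <= u * - ln eps.
Proof. intros. rewrite xlnx_pos by lra. pose proof (ln_le_mono eps u H ltac:(lra)). nra. Qed.

Lemma opp_xlnx_small_le a eps : 0 <= a < 2 * eps -> 2 * eps <= / exp 1 -> - xlnx a <= 2 * eps * - ln eps.
Proof.
 intros Ha He2.
 pose proof (xlnx_antitone a (2 * eps) ltac:(lra) ltac:(lra) He2) as H.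
 rewrite xlnx_pos in H by lra. assert (ln eps <= ln (2 * eps)) by (apply ln_le_mono; lra). nra.
Qed.

Lemma ln_half eps : 0 < eps -> - ln (eps / 2) = ln 2 + - ln eps.
Proof. intros. unfold Rdiv. rewrite ln_mult, ln_Rinv; lra. Qed.

Lemma xlnx_rescale_dist u Z eps : 0 < eps <= u -> u <= 1 -> 0 < Z <= 1 ->
  Rabs (xlnx u - xlnx (u / Z)) <= u * - ln eps * (/ Z - 1) + u / Z * - ln Z.
Proof.
 intros Hu Hu1 HZ.
 assert (HZi : 0 <= / Z - 1) by (assert (1 <= / Z); [rewrite <- Rinv_1; apply Rinv_le_contravar|]; lra).
 assert (HlZ : ln Z <= 0) by (apply ln_le0; lra).
 rewrite (xlnx_pos (u / Z)) by (apply Rdiv_lt_0_compat; lra). rewrite (xlnx_pos u) by lra.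
 unfold Rdiv. rewrite ln_mult, ln_Rinv by (try apply Rinv_0_lt_compat; lra).
 pose proof (opp_xlnx_le u eps ltac:(lra) ltac:(lra)) as Hp. rewrite xlnx_pos in Hp by lra.
 pose proof (ln_le0 u ltac:(lra) Hu1).
 replace (u * ln u - u * / Z * (ln u + - ln Z)) with ((- (u * ln u)) * (/ Z - 1) + u * / Z * ln Z) by ring.
 eapply Rle_trans; [apply Rabs_triang|].
 assert (0 <= - (u * ln u)) by nra.
 assert (0 <= u * / Z) by (apply Rmult_le_pos; [lra|left; apply Rinv_0_lt_compat; lra]).
 rewrite Rabs_right by (apply Rle_ge, Rmult_le_pos; lra). rewrite Rabs_left1 by nra.
 assert (- (u * ln u) * (/ Z - 1) <= u * - ln eps * (/ Z - 1)) by (apply Rmult_le_compat_r; lra). lra.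
Qed.

(* Atoms below [eps / 2] are handled through the gap [|u - a| >= eps / 2]. *)
Lemma xlnx_dist_le a u eps : 0 <= a <= 1 -> 0 < eps <= u -> u <= 1 -> 2 * eps <= / exp 1 ->
  Rabs (xlnx a - xlnx u) <= 3 * (1 + ln 2 + - ln eps) * Rabs (u - a).
Proof.
 intros Ha Hu Hu1 He2. pose proof inv_exp1_lt1. pose proof ln2_gt0.
 pose proof (opp_ln_small_gt0 eps ltac:(lra) He2).
 destruct (Rle_or_lt (eps / 2) a) as [Ha2|Ha2].
 - eapply Rle_trans; [apply (xlnx_lipschitz (eps / 2)); lra|].
   rewrite ln_half, Rabs_minus_sym by lra. pose proof (Rabs_pos (u - a)). nra.
 - assert (Hsmall : - xlnx a <= - xlnx (eps / 2))
     by (pose proof (xlnx_antitone a (eps / 2) ltac:(lra) ltac:(lra) ltac:(lra)); lra).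
   rewrite (xlnx_pos (eps / 2)) in Hsmall by lra.
   replace (- (eps / 2 * ln (eps / 2))) with (eps / 2 * - ln (eps / 2)) in Hsmall by ring.
   rewrite ln_half in Hsmall by lra.
   pose proof (opp_xlnx_le u eps ltac:(lra) ltac:(lra)).
   pose proof (xlnx_le0 a Ha). pose proof (xlnx_le0 u ltac:(lra)).
   rewrite (Rabs_right (u - a)) by lra. apply Rabs_le; split; nra.
Qed.

(** [a] is a true mass, [u] its empirical frequency and [Z] the empirical mass
    of [Gamma_eps]. *)
Lemma xlnx_cond_dist_le (a u Z eps : R) : 0 <= a <= 1 -> 0 <= u <= 1 -> 1/2 <= Z <= 1 ->
  0 < eps -> 2 * eps <= / exp 1 ->
  Rabs (xlnx a - xlnx (if Rle_dec eps u then u / Z else 0)) <=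
    3 * (1 + ln 2 + - ln eps) * Rabs (u - a)
    + (if Rle_dec eps u then u * (- ln eps) * (/ Z - 1) + (u / Z) * (- ln Z) else 0)
    + (if Rlt_dec a (2 * eps) then - xlnx a else 0).
Proof.
 intros Ha Hu HZ He He2. pose proof ln2_gt0. pose proof (opp_ln_small_gt0 eps He He2).
 assert (T3 : 0 <= (if Rlt_dec a (2 * eps) then - xlnx a else 0))
   by (destruct Rlt_dec; [pose proof (xlnx_le0 a Ha)|]; lra).
 destruct (Rle_dec eps u) as [Hgam|Hgam].
 - pose proof (xlnx_rescale_dist u Z eps ltac:(lra) ltac:(lra) ltac:(lra)).
   pose proof (xlnx_dist_le a u eps Ha ltac:(lra) ltac:(lra) He2).
   replace (xlnx a - xlnx (u / Z)) with ((xlnx a - xlnx u) + (xlnx u - xlnx (u / Z))) by ring.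
   eapply Rle_trans; [apply Rabs_triang|]. lra.
 - rewrite xlnx_0, Rminus_0_r, Rabs_left1 by (apply xlnx_le0; lra).
   destruct (Rlt_dec a (2 * eps)) as [Ha2|Ha2]; [pose proof (Rabs_pos (u - a)); nra|].
   assert (- xlnx a <= a * - ln eps) by (apply opp_xlnx_le; lra).
   rewrite Rabs_left by lra. nra.
Qed.

Lemma fsum_xlnx_cond_dist_le (f e : nat -> R) Z eps dl Sphi K :
  (forall x, 0 <= f x <= 1) -> (forall x, 0 <= e x <= 1) -> 1/2 <= Z <= 1 -> 0 < eps -> 2 * eps <= / exp 1 ->
  (forall K, fsum K (fun x => Rabs (e x - f x)) <= dl) ->
  (forall K, fsum K (fun x => if Rle_dec eps (e x) then e x else 0) <= Z) ->
  (forall K, fsum K (fun x => if Rlt_dec (f x) (2 * eps) then - xlnx (f x) else 0) <= Sphi) ->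
  fsum K (fun x => Rabs (xlnx (f x) - xlnx (if Rle_dec eps (e x) then e x / Z else 0)))
    <= 3 * (1 + ln 2 + - ln eps) * dl + (- ln eps + 2) * (1 - Z) + Sphi.
Proof.
 intros Hf He HZ Heps He2 Hdl HG HS.
 set (C := (- ln eps) * (/ Z - 1) + / Z * (- ln Z)).
 eapply Rle_trans; [apply fsum_le; intros x _; apply (xlnx_cond_dist_le (f x) (e x) Z eps); auto|].
 rewrite !fsum_plus, fsum_scal.
 rewrite (fsum_ext K (fun x => if Rle_dec eps (e x) then e x * - ln eps * (/ Z - 1) + e x / Z * - ln Z else 0)
   (fun x => C * (if Rle_dec eps (e x) then e x else 0))).
 2:{ intros x _; unfold C; destruct Rle_dec; [field; lra|ring]. }
 rewrite fsum_scal.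
 pose proof (opp_ln_small_gt0 eps Heps He2). pose proof ln2_gt0.
 assert (HlZ : - ln Z <= / Z - 1) by (rewrite <- ln_Rinv by lra; apply ln_le_sub1, Rinv_0_lt_compat; lra).
 assert (HZi : 0 <= / Z - 1) by (assert (1 <= / Z); [rewrite <- Rinv_1; apply Rinv_le_contravar|]; lra).
 assert (HZ2 : / Z - 1 <= 2 * (1 - Z)).
 { replace (/ Z - 1) with ((1 - Z) / Z) by (field; lra).
   apply (Rmult_le_reg_r Z); [lra|]. unfold Rdiv. rewrite Rmult_assoc, Rinv_l by lra. nra. }
 assert (HlZ0 : 0 <= - ln Z) by (pose proof (ln_le0 Z ltac:(lra) ltac:(lra)); lra).
 assert (HC : 0 <= C) by (unfold C; apply Rplus_le_le_0_compat; apply Rmult_le_pos; try lra; left; apply Rinv_0_lt_compat; lra).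
 assert (3 * (1 + ln 2 + - ln eps) * fsum K (fun x => Rabs (e x - f x)) <= 3 * (1 + ln 2 + - ln eps) * dl)
   by (apply Rmult_le_compat_l; [lra|apply Hdl]).
 assert (C * fsum K (fun x => if Rle_dec eps (e x) then e x else 0) <= C * Z) by (apply Rmult_le_compat_l; auto).
 assert (C * Z <= (- ln eps + 2) * (1 - Z)).
 { unfold C. replace ((- ln eps * (/ Z - 1) + / Z * - ln Z) * Z) with (- ln eps * (1 - Z) + - ln Z) by (field; lra). nra. }
 specialize (HS K). lra.
Qed.

Lemma entropy_has_sum b g L : 1 < b -> has_sum (fun x => xlnx (g x)) L -> entropy b g = - (L / ln b).
Proof.
 intros Hb H. assert (Hlb : 0 < ln b) by (rewrite <- ln_1; apply ln_increasing; lra).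
 unfold entropy. f_equal. apply series_value_has_sum.
 replace (L / ln b) with (/ ln b * L) by (field; lra). eapply has_sum_ext; [|apply (has_sum_scal _ _ (/ ln b) H)].
 intros x; simpl. unfold xlnx, logb. destruct Rlt_dec; [field; lra|ring].
Qed.

Section ExponentialTail.

Variables (f : nat -> R) (alpha k0 k1 : R) (N0 : nat).
Hypotheses (hf : forall x, 0 <= f x <= 1) (halpha : 0 < alpha) (hk0 : 0 < k0) (hk1 : 0 < k1).
Hypothesis hfb : forall x, (N0 <= x)%nat -> k0 * exp (- alpha * INR x) <= f x <= k1 * exp (- alpha * INR x).

Let r := exp (- alpha).

Lemma exp_opp_alpha_bounds : 0 < r < 1.
Proof. unfold r; split; [apply exp_pos|]. rewrite <- exp_0. apply exp_increasing; lra. Qed.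

Lemma exp_opp_alpha_nat x : exp (- alpha * INR x) = r ^ x.
Proof. unfold r. rewrite <- exp_mult_nat. f_equal; ring. Qed.

Lemma tail_weighted_sum_le m a c : (N0 <= m)%nat -> 0 <= a -> 0 <= c ->
  forall K, fsum K (fun x => if le_dec m x then f x * (a * INR x + c) else 0) <=
    k1 * r ^ m * ((a * INR m + c) * / (1 - r) + a * (r / (1 - r) ^ 2)).
Proof.
 intros Hm Ha Hc K. pose proof exp_opp_alpha_bounds as Hr.
 apply fsum_cond_ge. { intros x; apply Rmult_le_pos; [apply hf|]. pose proof (pos_INR x); nra. }
 intros J. eapply Rle_trans.
 { apply (fsum_le _ _ (fun j => k1 * r ^ m * ((a * INR m + c) * r ^ j + a * (INR j * r ^ j)))).
   intros j _. pose proof (proj2 (hfb (m + j)%nat ltac:(lia))) as H.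
   rewrite exp_opp_alpha_nat, pow_add in H. rewrite plus_INR.
   pose proof (pos_INR j); pose proof (pos_INR m). pose proof (pow_le r j ltac:(lra)).
   pose proof (pow_le r m ltac:(lra)). pose proof (hf (m + j)%nat).
   assert (0 <= a * (INR m + INR j) + c) by nra.
   apply (Rmult_le_compat_r (a * (INR m + INR j) + c)) in H; auto.
   eapply Rle_trans; [exact H|]. right; ring. }
 rewrite fsum_scal, fsum_plus, !fsum_scal.
 pose proof (pow_le r m ltac:(lra)). pose proof (pos_INR m).
 apply Rmult_le_compat_l; [apply Rmult_le_pos; lra|].
 apply Rplus_le_compat; apply Rmult_le_compat_l; try nra; [apply fsum_geom_le|apply fsum_arith_geom_le]; lra.
Qed.

(** [ms] is the first index past [N0] where the lower envelope drops below
    [2 eps]: beyond [N0] only atoms past [ms] can have mass below [2 eps],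
    and [ms = O(ln (1/eps))]. *)
Lemma small_atoms_start eps : 0 < eps -> 2 * eps <= / exp 1 -> exists ms,
  (N0 <= ms)%nat /\ (forall x, (N0 <= x)%nat -> f x < 2 * eps -> (ms <= x)%nat) /\
  k1 * r ^ ms <= 2 * k1 / k0 * eps /\
  alpha * INR ms <= alpha * (INR N0 + 1) + Rabs (ln k0) + - ln eps.
Proof.
 intros Heps He2. pose proof exp_opp_alpha_bounds as Hr. pose proof (opp_ln_small_gt0 eps Heps He2).
 destruct (pow_lt_1_zero r ltac:(rewrite Rabs_right; lra) (2 * eps / k0) ltac:(apply Rdiv_lt_0_compat; lra))
   as [N1 HN1].
 destruct (ex_least (fun m => (N0 <= m)%nat /\ k0 * r ^ m < 2 * eps)) as [ms [[Hms1 Hms2] Hmin]].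
 { exists (max N0 N1). split; [lia|].
   specialize (HN1 (max N0 N1) ltac:(lia)). rewrite Rabs_right in HN1 by (apply Rle_ge, pow_le; lra).
   apply (Rmult_lt_compat_l k0) in HN1; auto.
   replace (k0 * (2 * eps / k0)) with (2 * eps) in HN1 by (field; lra). lra. }
 exists ms. split; [auto|split; [|split]].
 - intros x Hx Hfx. destruct (le_lt_dec ms x) as [|Hlt]; auto. exfalso. apply (Hmin x Hlt). split; auto.
   destruct (hfb x Hx) as [H1 _]. rewrite exp_opp_alpha_nat in H1. lra.
 - apply (Rmult_le_reg_l k0); auto.
   replace (k0 * (2 * k1 / k0 * eps)) with (k1 * (2 * eps)) by (field; lra).
   pose proof (pow_le r ms ltac:(lra)). nra.
 - pose proof (Rle_abs (ln k0)). pose proof (Rabs_pos (ln k0)). destruct ms as [|p]; [simpl; pose proof (pos_INR N0); nra|].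
   destruct (le_lt_dec (S p) N0) as [Hle|Hlt]; [apply le_INR in Hle; nra|].
   assert (Hp : ~ (k0 * r ^ p < 2 * eps)) by (intros Hc; apply (Hmin p ltac:(lia)); split; [lia|auto]).
   assert (Hp2 : ln (2 * eps) <= ln (k0 * r ^ p)) by (apply ln_le_mono; lra).
   rewrite <- exp_opp_alpha_nat, !ln_mult, ln_exp in Hp2 by (auto; try apply exp_pos; lra).
   pose proof ln2_gt0. pose proof (pos_INR N0). rewrite S_INR. nra.
Qed.

Lemma small_atoms_mass_le : exists A3, 0 <= A3 /\ forall eps, 0 < eps -> 2 * eps <= / exp 1 ->
  forall K, fsum K (fun x => if Rlt_dec (f x) (2 * eps) then f x else 0) <= A3 * eps.
Proof.
 pose proof exp_opp_alpha_bounds as Hr. pose proof (pos_INR N0).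
 assert (Hq : 0 < / (1 - r)) by (apply Rinv_0_lt_compat; lra).
 assert (Hkk : 0 < 2 * k1 / k0) by (apply Rdiv_lt_0_compat; lra).
 exists (2 * INR N0 + 2 * k1 / k0 * / (1 - r)).
 split; [apply Rplus_le_le_0_compat; [lra|apply Rmult_le_pos; lra]|].
 intros eps Heps He2 K.
 destruct (small_atoms_start eps Heps He2) as [ms [Hms1 [Hge [Hrms _]]]].
 assert (Hrms0 : 0 <= k1 * r ^ ms) by (pose proof (pow_le r ms ltac:(lra)); nra).
 eapply Rle_trans.
 { apply (fsum_le _ _ (fun x => (if lt_dec x N0 then 2 * eps else 0) + (if le_dec ms x then f x * (0 * INR x + 1) else 0))).
   intros x _. pose proof (hf x).
   destruct (Rlt_dec (f x) (2 * eps)); destruct (lt_dec x N0); destruct (le_dec ms x); try lra.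
   exfalso; apply n0; apply Hge; auto; lia. }
 rewrite fsum_plus. pose proof (fsum_cond_lt N0 K (2 * eps) ltac:(lra)).
 pose proof (tail_weighted_sum_le ms 0 1 Hms1 ltac:(lra) ltac:(lra) K).
 assert (k1 * r ^ ms * ((0 * INR ms + 1) * / (1 - r) + 0 * (r / (1 - r) ^ 2)) <= 2 * k1 / k0 * eps * / (1 - r)).
 { replace ((0 * INR ms + 1) * / (1 - r) + 0 * (r / (1 - r) ^ 2)) with (/ (1 - r)) by ring.
   apply Rmult_le_compat_r; lra. }
 nra.
Qed.

Lemma opp_xlnx_tail_le x : (N0 <= x)%nat -> - xlnx (f x) <= f x * (alpha * INR x + Rabs (ln k0)).
Proof.
 intros Hx. destruct (hfb x Hx) as [H1 _].
 assert (Hpos : 0 < k0 * exp (- alpha * INR x)) by (pose proof (exp_pos (- alpha * INR x)); nra).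
 rewrite xlnx_pos by lra.
 assert (Hl : ln (k0 * exp (- alpha * INR x)) <= ln (f x)) by (apply ln_le_mono; lra).
 rewrite ln_mult, ln_exp in Hl by (auto; apply exp_pos).
 assert (- ln k0 <= Rabs (ln k0)) by (rewrite <- Rabs_Ropp; apply RRle_abs).
 pose proof (hf x). nra.
Qed.

Lemma small_atoms_xlnx_le : exists A1 A2, 0 <= A1 /\ 0 <= A2 /\ forall eps, 0 < eps -> 2 * eps <= / exp 1 ->
  forall K, fsum K (fun x => if Rlt_dec (f x) (2 * eps) then - xlnx (f x) else 0) <= eps * (A1 * (- ln eps) + A2).
Proof.
 pose proof exp_opp_alpha_bounds as Hr. pose proof (pos_INR N0).
 set (c0 := Rabs (ln k0)). assert (Hc0 : 0 <= c0) by apply Rabs_pos.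
 assert (Hq : 0 < / (1 - r)) by (apply Rinv_0_lt_compat; lra).
 assert (Hq2 : 0 < r / (1 - r) ^ 2) by (apply Rdiv_lt_0_compat; [lra|apply pow_lt; lra]).
 assert (Hkk : 0 < 2 * k1 / k0) by (apply Rdiv_lt_0_compat; lra).
 exists (2 * INR N0 + 2 * k1 / k0 * / (1 - r)),
        (2 * k1 / k0 * ((alpha * (INR N0 + 1) + 2 * c0) * / (1 - r) + alpha * (r / (1 - r) ^ 2))).
 split; [apply Rplus_le_le_0_compat; [lra|apply Rmult_le_pos; lra]|].
 split; [apply Rmult_le_pos; [lra|apply Rplus_le_le_0_compat; apply Rmult_le_pos; nra]|].
 intros eps Heps He2 K. pose proof (opp_ln_small_gt0 eps Heps He2).
 destruct (small_atoms_start eps Heps He2) as [ms [Hms1 [Hge [Hrms Hmsb]]]]. fold c0 in Hmsb.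
 eapply Rle_trans.
 { apply (fsum_le _ _ (fun x => (if lt_dec x N0 then 2 * eps * - ln eps else 0)
                                + (if le_dec ms x then f x * (alpha * INR x + c0) else 0))).
   intros x _. pose proof (pos_INR x). pose proof (hf x).
   assert (0 <= f x * (alpha * INR x + c0)) by (apply Rmult_le_pos; nra).
   assert (0 <= 2 * eps * - ln eps) by nra.
   destruct (Rlt_dec (f x) (2 * eps)) as [Hf2|Hf2]; [|destruct (lt_dec x N0); destruct (le_dec ms x); lra].
   pose proof (opp_xlnx_small_le (f x) eps ltac:(lra) He2).
   destruct (lt_dec x N0) as [Hx|Hx]; [destruct (le_dec ms x); lra|].
   destruct (le_dec ms x) as [Hmx|Hmx]; [|exfalso; apply Hmx, Hge; auto; lia].
   pose proof (opp_xlnx_tail_le x ltac:(lia)) as Htail. fold c0 in Htail. lra. }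
 rewrite fsum_plus. pose proof (fsum_cond_lt N0 K (2 * eps * - ln eps) ltac:(nra)).
 pose proof (tail_weighted_sum_le ms alpha c0 Hms1 ltac:(lra) Hc0 K).
 assert (k1 * r ^ ms * ((alpha * INR ms + c0) * / (1 - r) + alpha * (r / (1 - r) ^ 2)) <=
         2 * k1 / k0 * eps * ((alpha * (INR N0 + 1) + 2 * c0 + - ln eps) * / (1 - r) + alpha * (r / (1 - r) ^ 2))).
 { pose proof (pow_le r ms ltac:(lra)). pose proof (pos_INR ms).
   apply Rmult_le_compat; [nra| |lra|].
   - apply Rplus_le_le_0_compat; apply Rmult_le_pos; nra.
   - apply Rplus_le_compat_r. apply Rmult_le_compat_r; lra. }
 nra.
Qed.

Lemma tail_cutoff : exists (c1 : R) (M : R -> nat), 0 <= c1 /\ forall L, 0 <= L ->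
  INR (M L) <= INR N0 + (L + c1) / alpha + 1 /\
  forall K, fsum K (fun x => f x * indic (fun y => (M L <= y)%nat) x) <= exp (- L) / 2.
Proof.
 pose proof exp_opp_alpha_bounds as Hr.
 assert (Hq : 0 < 2 * k1 / (1 - r)) by (apply Rdiv_lt_0_compat; lra).
 set (c1 := Rabs (ln (2 * k1 / (1 - r)))).
 exists c1, (fun L => (N0 + Z.to_nat (up ((L + c1) / alpha)))%nat).
 split; [apply Rabs_pos|]. intros L HL.
 assert (Hy : 0 <= (L + c1) / alpha)
   by (unfold Rdiv; apply Rmult_le_pos; [pose proof (Rabs_pos (ln (2 * k1 / (1 - r)))); unfold c1; lra|left; apply Rinv_0_lt_compat; lra]).
 pose proof (up_nat_bounds _ Hy) as [Hup1 Hup2].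
 set (M := (N0 + Z.to_nat (up ((L + c1) / alpha)))%nat).
 assert (HMR : INR M = INR N0 + INR (Z.to_nat (up ((L + c1) / alpha)))) by (unfold M; apply plus_INR).
 split; [lra|]. intros K.
 assert (HMlo : L + c1 <= alpha * INR M).
 { apply (Rmult_le_compat_l alpha) in Hup1; [|lra].
   replace (alpha * ((L + c1) / alpha)) with (L + c1) in Hup1 by (field; lra). pose proof (pos_INR N0). nra. }
 pose proof (tail_weighted_sum_le M 0 1 ltac:(unfold M; lia) ltac:(lra) ltac:(lra) K) as HT.
 rewrite (fsum_ext K _ (fun x => if le_dec M x then f x * (0 * INR x + 1) else 0)).
 2:{ intros x _. destruct le_dec; [rewrite indic_true by auto|rewrite indic_false by auto]; ring. }
 eapply Rle_trans; [exact HT|].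
 replace ((0 * INR M + 1) * / (1 - r) + 0 * (r / (1 - r) ^ 2)) with (/ (1 - r)) by ring.
 rewrite <- exp_opp_alpha_nat.
 assert (H1 : exp (- alpha * INR M) <= exp (- L) * exp (- c1)) by (rewrite <- exp_plus; apply exp_le_mono; lra).
 assert (H2 : exp (- c1) <= / (2 * k1 / (1 - r))).
 { rewrite <- (exp_ln (2 * k1 / (1 - r))), <- exp_Ropp by auto. apply exp_le_mono.
   unfold c1. pose proof (RRle_abs (ln (2 * k1 / (1 - r)))). lra. }
 pose proof (exp_pos (- L)).
 assert (H3 : exp (- alpha * INR M) <= exp (- L) * / (2 * k1 / (1 - r))).
 { eapply Rle_trans; [exact H1|]. apply Rmult_le_compat_l; lra. }
 replace (exp (- L) / 2) with (k1 * (exp (- L) * / (2 * k1 / (1 - r))) * / (1 - r)) by (field; lra).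
 apply Rmult_le_compat_r; [left; apply Rinv_0_lt_compat; lra|]. apply Rmult_le_compat_l; lra.
Qed.

End ExponentialTail.

Lemma Rpower_gt0 x y : 0 < Rpower x y.
Proof. apply exp_pos. Qed.

Lemma Rpower_opp_small tau A : 0 < tau -> 0 < A -> exists n2, (1 <= n2)%nat /\ forall n, (n2 <= n)%nat ->
  1 <= tau * ln (INR n) /\ 2 * Rpower (INR n) (- tau) <= / exp 1 /\ A * Rpower (INR n) (- tau) <= 1/2.
Proof.
 intros Htau HA. set (c := 1 + ln 2 + Rabs (ln (2 * A))).
 destruct (eventually_ln_ge (c / tau)) as [n2 [Hn2 Hln]]. exists n2. split; auto. intros n Hn.
 assert (Hc : c <= tau * ln (INR n)).
 { specialize (Hln n Hn). apply (Rmult_le_compat_l tau) in Hln; [|lra].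
   replace (tau * (c / tau)) with c in Hln by (field; lra). lra. }
 pose proof ln2_gt0. pose proof (Rabs_pos (ln (2 * A))). pose proof (RRle_abs (ln (2 * A))).
 unfold Rpower. replace (- tau * ln (INR n)) with (- (tau * ln (INR n))) by ring.
 split; [unfold c in Hc; lra|split].
 - rewrite <- (exp_ln 2) at 1 by lra. rewrite <- exp_plus, <- exp_Ropp. apply exp_le_mono. unfold c in Hc; lra.
 - rewrite <- (exp_ln A) at 1 by lra. rewrite <- exp_plus.
   replace (1 / 2) with (exp (- ln 2)) by (rewrite exp_Ropp, exp_ln by lra; field).
   apply exp_le_mono. rewrite ln_mult in H1 at 1 by lra. unfold c in Hc. lra.
Qed.

Lemma linear_ln_le_Rpower d a0 a1 : 0 < d -> 0 <= a0 -> 0 <= a1 ->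
  exists n2, (1 <= n2)%nat /\ forall n, (n2 <= n)%nat -> a0 + a1 * ln (INR n) <= Rpower (INR n) d.
Proof.
 intros Hd Ha0 Ha1. destruct (linear_le_exp d a0 a1 Hd Ha0 Ha1) as [U [HU HUexp]].
 destruct (eventually_ln_ge U) as [n2 [Hn2 Hln]]. exists n2. split; [auto|].
 intros n Hn. apply HUexp, Hln, Hn.
Qed.

Lemma exp_opp_Rpower_decay beta : 0 < beta -> exists Cs, forall n, (1 <= n)%nat ->
  2 * INR n * exp (- Rpower (INR n) beta / 8) <= Cs * / (INR n * INR (n + 1)).
Proof.
 intros Hbeta. destruct (nat_gt 1 (4 / beta)) as [k [Hk1 Hkb]].
 assert (Hkb' : 4 <= INR k * beta).
 { apply (Rmult_lt_compat_r beta) in Hkb; auto. replace (4 / beta * beta) with 4 in Hkb by (field; lra). lra. }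
 assert (HQ : 0 < (8 * INR k) ^ k) by (apply pow_lt; pose proof (le_INR 1 k Hk1); simpl in H; lra).
 exists (4 * (8 * INR k) ^ k). intros n Hn. set (N := INR n).
 assert (HN : 1 <= N) by (apply (le_INR 1); auto).
 set (y := Rpower N beta). assert (Hy0 : 0 < y) by apply Rpower_gt0.
 assert (HyN : N ^ 4 <= y ^ k).
 { rewrite <- (Rpower_pow 4 N), <- (Rpower_pow k y) by (try apply Rpower_gt0; lra).
   unfold y. rewrite Rpower_mult. apply Rle_Rpower; [lra|]. simpl (INR 4). lra. }
 assert (HN4 : 0 < N ^ 4) by (apply pow_lt; lra).
 assert (Hdec : exp (- y / 8) <= (8 * INR k) ^ k * / N ^ 4).
 { eapply Rle_trans; [apply (exp_opp_le_pow y k Hy0 Hk1)|].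
   unfold Rdiv. rewrite Rpow_mult_distr, pow_inv. apply Rmult_le_compat_l; [lra|].
   apply Rinv_le_contravar; auto. }
 assert (HP1 : 2 * N * exp (- y / 8) <= (8 * INR k) ^ k * (2 / N ^ 3)).
 { replace ((8 * INR k) ^ k * (2 / N ^ 3)) with (2 * N * ((8 * INR k) ^ k * / N ^ 4)) by (field; lra).
   apply Rmult_le_compat_l; lra. }
 eapply Rle_trans; [exact HP1|]. rewrite plus_INR. fold N. simpl (INR 1).
 replace (4 * (8 * INR k) ^ k * / (N * (N + 1))) with ((8 * INR k) ^ k * (4 / (N * (N + 1)))) by (field; lra).
 apply Rmult_le_compat_l; [lra|]. apply (Rmult_le_reg_r (N ^ 3 * (N * (N + 1)))).
 { apply Rmult_lt_0_compat; [apply pow_lt; lra|nra]. }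
 replace (2 / N ^ 3 * (N ^ 3 * (N * (N + 1)))) with (2 * (N * (N + 1))) by (field; lra).
 replace (4 / (N * (N + 1)) * (N ^ 3 * (N * (N + 1)))) with (4 * N ^ 3) by (field; nra).
 simpl pow. nra.
Qed.

(** With [t n = n^-tau'] for [tau < tau' < 1/2], a cutoff of size
    [O(ln n)] costs [(M + 1) t = o(n^-tau)] in l1 while [n t^2 = n^(1 - 2 tau')]
    keeps the deviation probabilities summable. *)
Lemma sample_rates tau a0 a1 A : 0 < tau < 1/2 -> 0 <= a0 -> 0 <= a1 -> 0 < A ->
  exists (t : nat -> R) (n2 : nat) (Cs : R), (1 <= n2)%nat /\ forall n, (n2 <= n)%nat ->
    1 <= tau * ln (INR n) /\ 2 * Rpower (INR n) (- tau) <= / exp 1 /\ A * Rpower (INR n) (- tau) <= 1/2 /\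
    0 < t n <= 1 /\ (a0 + a1 * ln (INR n)) * t n <= Rpower (INR n) (- tau) /\
    2 * (a0 + a1 * ln (INR n)) * exp (- (INR n * t n ^ 2) / 8) <= Cs * / (INR n * INR (n + 1)).
Proof.
 intros Htau Ha0 Ha1 HA. set (tau' := (tau + 1 / 2) / 2).
 destruct (Rpower_opp_small tau A ltac:(lra) HA) as [n2 [Hn2 Hsmall]].
 destruct (linear_ln_le_Rpower (tau' - tau) a0 a1 ltac:(unfold tau'; lra) Ha0 Ha1) as [n3 [Hn3 Hlin]].
 destruct (exp_opp_Rpower_decay (1 - 2 * tau') ltac:(unfold tau'; lra)) as [Cs HCs].
 exists (fun n => Rpower (INR n) (- tau')), (max n2 n3), Cs. split; [lia|]. intros n Hn.
 assert (HN : 1 <= INR n) by (apply (le_INR 1); lia).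
 specialize (Hlin n ltac:(lia)).
 destruct (Hsmall n ltac:(lia)) as [H1 [H2 H3]]. split; [auto|split; [auto|split; [auto|]]].
 assert (Ht1 : Rpower (INR n) (- tau') <= 1)
   by (rewrite <- (Rpower_O (INR n)) by lra; apply Rle_Rpower; unfold tau'; lra).
 split; [split; [apply Rpower_gt0|auto]|split].
 - eapply Rle_trans; [apply Rmult_le_compat_r; [left; apply Rpower_gt0|exact Hlin]|].
   rewrite <- Rpower_plus. right; f_equal; ring.
 - assert (Hnt : INR n * Rpower (INR n) (- tau') ^ 2 = Rpower (INR n) (1 - 2 * tau')).
   { rewrite <- (Rpower_1 (INR n)) at 1 by lra. simpl pow. rewrite Rmult_1_r, <- !Rpower_plus. f_equal; ring. }
   rewrite Hnt. eapply Rle_trans; [|apply (HCs n ltac:(lia))].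
   assert (a0 + a1 * ln (INR n) <= INR n).
   { eapply Rle_trans; [exact Hlin|]. rewrite <- (Rpower_1 (INR n)) at 2 by lra.
     apply Rle_Rpower; unfold tau'; lra. }
   pose proof (exp_pos (- Rpower (INR n) (1 - 2 * tau') / 8)). nra.
Qed.

Section ProbabilitySpace.

Variables (Omega : Type) (F : (Omega -> Prop) -> Prop) (P : (Omega -> Prop) -> R).
Hypothesis hP : is_prob_space F P.

Lemma event_true : F (fun _ => True).
Proof. destruct hP as [[H _] _]; auto. Qed.

Lemma event_not A : F A -> F (fun w => ~ A w).
Proof. destruct hP as [[_ [H _]] _]; auto. Qed.

Lemma event_exists (E : nat -> Omega -> Prop) : (forall n, F (E n)) -> F (fun w => exists n, E n w).
Proof. destruct hP as [[_ [_ H]] _]; auto. Qed.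

Lemma event_ext (A B : Omega -> Prop) : (forall w, A w <-> B w) -> F A -> F B.
Proof. intros H; rewrite (pred_ext A B H); auto. Qed.

Lemma prob_ext (A B : Omega -> Prop) : (forall w, A w <-> B w) -> P A = P B.
Proof. intros H; rewrite (pred_ext A B H); auto. Qed.

Lemma event_false : F (fun _ => False).
Proof. eapply event_ext; [|apply (event_not _ event_true)]. simpl; tauto. Qed.

Lemma event_or A B : F A -> F B -> F (fun w => A w \/ B w).
Proof.
 intros HA HB. eapply event_ext; [|apply (event_exists (fun n => match n with O => A | _ => B end))].
 - intros w; split; [intros [n Hn]; destruct n; auto|intros [H|H]; [exists O|exists 1%nat]; auto].
 - intros [|n]; auto.
Qed.

Lemma event_and A B : F A -> F B -> F (fun w => A w /\ B w).
Proof.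
 intros HA HB. eapply event_ext; [|apply (event_not _ (event_or _ _ (event_not _ HA) (event_not _ HB)))].
 intros w; split; [intros H; split; apply NNPP; tauto| tauto].
Qed.

Lemma event_forall (E : nat -> Omega -> Prop) : (forall n, F (E n)) -> F (fun w => forall n, E n w).
Proof.
 intros H. eapply event_ext; [|apply (event_not _ (event_exists (fun n w => ~ E n w) (fun n => event_not _ (H n))))].
 intros w; split; [intros Hw n; apply NNPP; intros Hn; apply Hw; eauto|intros Hw [n Hn]; auto].
Qed.

Lemma event_forall_lt (E : nat -> Omega -> Prop) n :
  (forall k, (k < n)%nat -> F (E k)) -> F (fun w => forall k, (k < n)%nat -> E k w).
Proof.
 induction n; intros H.
 - eapply event_ext; [|apply event_true]. intros; split; auto; intros; lia.
 - eapply event_ext; [|apply (event_and _ _ (IHn (fun k Hk => H k ltac:(lia))) (H n ltac:(lia)))].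
   intros w; split.
   + intros [H1 H2] k Hk; destruct (Nat.eq_dec k n); subst; auto; apply H1; lia.
   + intros Hw; split; [intros; apply Hw; lia|apply Hw; lia].
Qed.

Lemma prob_ge0 A : F A -> 0 <= P A.
Proof. destruct hP as [_ [H _]]; auto. Qed.

Lemma prob_true : P (fun _ => True) = 1.
Proof. destruct hP as [_ [_ [H _]]]; auto. Qed.

Lemma prob_has_sum (E : nat -> Omega -> Prop) : (forall n, F (E n)) ->
  (forall n m w, n <> m -> E n w -> E m w -> False) ->
  has_sum (fun n => P (E n)) (P (fun w => exists n, E n w)).
Proof. destruct hP as [_ [_ [_ H]]]. intros H1 H2. apply infinite_sum_has_sum; auto. Qed.

Lemma prob_false : P (fun _ => False) = 0.
Proof.
 pose proof (prob_has_sum (fun _ _ => False) (fun _ => event_false) ltac:(tauto)) as H. cbv beta in H.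
 rewrite (prob_ext (fun w => exists n : nat, False) (fun _ => False)) in H by (intros; split; [intros [_ []]|tauto]).
 pose proof (fsum_le_has_sum _ _ 2 (fun _ => prob_ge0 _ event_false) H). simpl in H0.
 pose proof (prob_ge0 _ event_false). lra.
Qed.

Lemma prob_or_disjoint A B : F A -> F B -> (forall w, A w -> B w -> False) ->
  P (fun w => A w \/ B w) = P A + P B.
Proof.
 intros HA HB Hd. set (E := fun n => match n with O => A | 1%nat => B | _ => fun _ => False end).
 assert (HE : forall n, F (E n)) by (intros [|[|n]]; simpl; auto; apply event_false).
 assert (Hdj : forall n m w, n <> m -> E n w -> E m w -> False).
 { intros [|[|n]] [|[|m]] w Hnm; simpl; try tauto; try lia; eauto. }
 pose proof (prob_has_sum E HE Hdj) as H.
 rewrite (prob_ext (fun w => exists n, E n w) (fun w => A w \/ B w)) in H.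
 - assert (H2 : has_sum (fun n => P (E n)) (fsum 2 (fun n => P (E n)))).
   { apply has_sum_finite. intros [|[|k]] Hk; try lia. apply prob_false. }
   rewrite (has_sum_unique _ _ _ H H2); simpl; lra.
 - intros w; split; [intros [[|[|n]] Hn]; simpl in Hn; tauto|intros [Hw|Hw]; [exists O|exists 1%nat]; auto].
Qed.

Lemma prob_le A B : F A -> F B -> (forall w, A w -> B w) -> P A <= P B.
Proof.
 intros HA HB Hs. assert (HBA : F (fun w => B w /\ ~ A w)) by (apply (event_and _ _ HB (event_not _ HA))).
 rewrite (prob_ext B (fun w => A w \/ (B w /\ ~ A w))).
 - rewrite prob_or_disjoint by (auto; tauto). pose proof (prob_ge0 _ HBA). lra.
 - intros w; split; [intros Hw; destruct (classic (A w)); tauto| intros [H|[H _]]; auto].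
Qed.

Lemma prob_not A : F A -> P (fun w => ~ A w) = 1 - P A.
Proof.
 intros HA. rewrite <- prob_true, (prob_ext (fun _ => True) (fun w => A w \/ ~ A w))
   by (intros w; split; [intros; apply classic|tauto]).
 rewrite (prob_or_disjoint _ _ HA (event_not _ HA)) by tauto. lra.
Qed.

Lemma prob_or_le A B : F A -> F B -> P (fun w => A w \/ B w) <= P A + P B.
Proof.
 intros HA HB. assert (HBA : F (fun w => B w /\ ~ A w)) by (apply (event_and _ _ HB (event_not _ HA))).
 rewrite (prob_ext _ (fun w => A w \/ (B w /\ ~ A w))).
 - rewrite prob_or_disjoint by (auto; tauto).
   pose proof (prob_le _ B HBA HB (fun w H => proj1 H)). lra.
 - intros w; split; [intros [H|H]; [auto|destruct (classic (A w)); tauto]|tauto].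
Qed.

Lemma prob_exists_le (B : nat -> Omega -> Prop) b S : (forall n, F (B n)) ->
  (forall n, P (B n) <= b n) -> (forall J, fsum J b <= S) -> P (fun w => exists n, B n w) <= S.
Proof.
 intros HB Hb HS.
 set (D := fun n w => B n w /\ forall k, (k < n)%nat -> ~ B k w).
 assert (HD : forall n, F (D n)).
 { intros n; apply (event_and _ _ (HB n)), (event_forall_lt (fun k w => ~ B k w)).
   intros; apply event_not, HB. }
 assert (Hdj : forall n m w, n <> m -> D n w -> D m w -> False).
 { intros n m w Hnm [Hn Hn'] [Hm Hm'].
   destruct (Nat.lt_total n m) as [Hlt|[Heq|Hgt]]; [eapply Hm'; eauto|lia|eapply Hn'; eauto]. }
 pose proof (prob_has_sum D HD Hdj) as H.
 rewrite (prob_ext (fun w => exists n, D n w) (fun w => exists n, B n w)) in H.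
 - apply (has_sum_ub _ _ _ H). intros J. eapply Rle_trans; [|apply (HS J)]. apply fsum_le. intros k _.
   eapply Rle_trans; [|apply Hb]. apply prob_le; auto. intros w [? _]; auto.
 - intros w; split; [intros [n [Hn _]]; eauto|].
   intros Hw; apply ex_least in Hw; destruct Hw as [n Hn]; exists n; exact Hn.
Qed.

Lemma prob_eventually_never_le (B : nat -> Omega -> Prop) Cs m :
  (forall n, F (B n)) -> (1 <= m)%nat ->
  (forall n, (m <= n)%nat -> P (B n) <= Cs * / (INR n * INR (n + 1))) ->
  F (fun w => exists n0, forall n, (n0 <= n)%nat -> ~ B n w) /\
  P (fun w => ~ exists n0, forall n, (n0 <= n)%nat -> ~ B n w) <= Cs * / INR m.
Proof.
 intros HB Hm HPB. set (E := fun w => exists n0, forall n, (n0 <= n)%nat -> ~ B n w).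
 assert (HFE : F E).
 { apply (event_exists (fun n0 w => forall n, (n0 <= n)%nat -> ~ B n w)). intros n0.
   apply (event_forall (fun n w => (n0 <= n)%nat -> ~ B n w)). intros n.
   destruct (le_dec n0 n) as [Hl|Hl].
   - eapply event_ext; [|apply (event_not _ (HB n))]. intros w; tauto.
   - eapply event_ext; [|apply event_true]. intros w; tauto. }
 split; auto.
 eapply Rle_trans.
 - apply (prob_le _ (fun w => exists j, B (m + j)%nat w) (event_not _ HFE) (event_exists _ (fun j => HB _))).
   intros w Hw. apply NNPP; intros Hno. apply Hw. exists m. intros n Hn HBn. apply Hno. exists (n - m)%nat.
   replace (m + (n - m))%nat with n by lia; auto.
 - apply (prob_exists_le (fun j w => B (m + j)%nat w) (fun j => Cs * / (INR (m + j) * INR (m + j + 1)))).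
   + intros j; apply HB.
   + intros j; apply HPB; lia.
   + assert (HCs : 0 <= Cs).
     { pose proof (HPB m (le_n _)). pose proof (prob_ge0 _ (HB m)).
       assert (Hp : 0 < / (INR m * INR (m + 1))) by (apply Rinv_0_lt_compat, Rmult_lt_0_compat; apply lt_0_INR; lia).
       nra. }
     intros J. rewrite fsum_scal, fsum_telescope_inv by lia. apply Rmult_le_compat_l; auto.
     assert (0 < / INR (m + J)) by (apply Rinv_0_lt_compat, lt_0_INR; lia). lra.
Qed.

Lemma borel_cantelli (B : nat -> Omega -> Prop) Cs m1 : (forall n, F (B n)) -> (1 <= m1)%nat ->
  (forall n, (m1 <= n)%nat -> P (B n) <= Cs * / (INR n * INR (n + 1))) ->
  F (fun w => exists n0, forall n, (n0 <= n)%nat -> ~ B n w) /\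
  P (fun w => exists n0, forall n, (n0 <= n)%nat -> ~ B n w) = 1.
Proof.
 intros HB Hm1 HPB. set (E := fun w => exists n0, forall n, (n0 <= n)%nat -> ~ B n w).
 destruct (prob_eventually_never_le B Cs m1 HB Hm1 HPB) as [HFE _]. split; auto.
 assert (Hm : forall m, (m1 <= m)%nat -> P (fun w => ~ E w) * INR m <= Cs).
 { intros m Hm. assert (HmR : 0 < INR m) by (apply lt_0_INR; lia).
   destruct (prob_eventually_never_le B Cs m HB ltac:(lia) (fun n Hn => HPB n ltac:(lia))) as [_ H].
   apply (Rmult_le_compat_r (INR m)) in H; [|lra]. rewrite Rmult_assoc, Rinv_l in H by lra.
   unfold E; lra. }
 pose proof (prob_not _ HFE). pose proof (prob_ge0 _ (event_not _ HFE)).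
 destruct (Rle_or_lt (P (fun w => ~ E w)) 0) as [Hq|Hq]; [unfold E in *; lra|].
 destruct (nat_gt m1 (Cs / P (fun w => ~ E w))) as [m [Hm1' Hma]].
 specialize (Hm m Hm1'). apply (Rmult_lt_compat_r (P (fun w => ~ E w))) in Hma; auto.
 replace (Cs / P (fun w => ~ E w) * P (fun w => ~ E w)) with Cs in Hma by (field; lra).
 unfold E in *; lra.
Qed.


Variable X : nat -> Omega -> nat.

Definition emp_atom n w x := emp X n w (fun y => y = x).

Lemma emp_ext n w A B : (forall y, A y <-> B y) -> emp X n w A = emp X n w B.
Proof. intros H; rewrite (pred_ext A B H); auto. Qed.

Lemma emp_bounds n w A : (1 <= n)%nat -> 0 <= emp X n w A <= 1.
Proof.
 intros Hn. unfold emp. assert (HnR : 1 <= INR n) by (apply (le_INR 1); auto).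
 assert (0 <= fsum n (fun k => indic A (X k w)) <= INR n).
 { split; [apply fsum_ge0; intros; apply indic_bounds|].
   rewrite <- (Rmult_1_r (INR n)), <- fsum_const. apply fsum_le; intros; apply indic_bounds. }
 split; [apply Rmult_le_pos; [left; apply Rinv_0_lt_compat; lra|lra]|].
 apply (Rmult_le_reg_l (INR n)); [lra|]. rewrite <- Rmult_assoc, Rinv_r by lra. lra.
Qed.

Lemma emp_le n w (A B : nat -> Prop) : (forall y, A y -> B y) -> emp X n w A <= emp X n w B.
Proof.
 intros H. unfold emp. destruct n; [simpl; lra|]. apply Rmult_le_compat_l.
 - left; apply Rinv_0_lt_compat; apply lt_0_INR; lia.
 - apply fsum_le; intros k _. unfold indic. do 2 destruct excluded_middle_informative; try lra. exfalso; auto.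
Qed.

Lemma emp_not n w A : (1 <= n)%nat -> emp X n w A + emp X n w (fun y => ~ A y) = 1.
Proof.
 intros Hn. unfold emp. rewrite <- Rmult_plus_distr_l, <- fsum_plus.
 rewrite (fsum_ext n _ (fun _ => 1)), fsum_const. field. apply not_0_INR; lia.
 intros k _. unfold indic. do 2 destruct excluded_middle_informative; tauto || lra.
Qed.

Lemma emp_false n w : emp X n w (fun _ => False) = 0.
Proof. unfold emp. rewrite (fsum_ext n _ (fun _ => 0)), fsum_const. ring. intros; apply indic_false; auto. Qed.

Lemma fsum_indic_mul_point (A : nat -> Prop) y K :
  fsum K (fun x => indic A x * indic (fun z => z = x) y) = indic (fun z => (z < K)%nat /\ A z) y.
Proof.
 induction K; simpl fsum.
 - rewrite indic_false; [auto|intros [? _]; lia].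
 - rewrite IHK. destruct (Nat.lt_total y K) as [H|[H|H]].
   + rewrite (indic_false (fun z => z = K)) by lia. rewrite Rmult_0_r, Rplus_0_r.
     apply indic_ext. split; intros []; split; auto; lia.
   + subst y. rewrite (indic_true (fun z => z = K)) by auto.
     rewrite (indic_false (fun z => (z < K)%nat /\ A z)) by (intros []; lia).
     rewrite Rmult_1_r, Rplus_0_l. apply indic_ext. split; [intros; split; auto|intros []; auto].
   + rewrite (indic_false (fun z => z = K)) by lia. rewrite Rmult_0_r, Rplus_0_r.
     rewrite !indic_false; auto; intros []; lia.
Qed.

Lemma fsum_emp_atom n w (A : nat -> Prop) K :
  fsum K (fun x => indic A x * emp_atom n w x) = emp X n w (fun y => (y < K)%nat /\ A y).
Proof.
 unfold emp_atom, emp.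
 rewrite (fsum_ext K _ (fun x => / INR n * (indic A x * fsum n (fun k => indic (fun y => y = x) (X k w))))).
 2:{ intros; ring. }
 rewrite fsum_scal. f_equal.
 rewrite (fsum_ext K _ (fun x => fsum n (fun k => indic A x * indic (fun y => y = x) (X k w)))).
 2:{ intros; rewrite <- fsum_scal; auto. }
 rewrite fsum_exchange. apply fsum_ext. intros k _. apply fsum_indic_mul_point.
Qed.

Lemma sample_bounded n w : exists K0, forall k, (k < n)%nat -> (X k w < K0)%nat.
Proof.
 induction n; [exists O; intros; lia|]. destruct IHn as [K0 H]. exists (max K0 (S (X n w))).
 intros k Hk. destruct (Nat.eq_dec k n); [subst; lia|]. specialize (H k ltac:(lia)); lia.
Qed.

Lemma emp_restrict n w (A : nat -> Prop) K0 K :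
  (forall k, (k < n)%nat -> (X k w < K0)%nat) -> (K0 <= K)%nat ->
  emp X n w (fun y => (y < K)%nat /\ A y) = emp X n w A.
Proof.
 intros H HK. unfold emp. f_equal. apply fsum_ext. intros k Hk.
 apply indic_ext. specialize (H k Hk). split; [tauto|split; auto; lia].
Qed.

Lemma emp_atom_out n w K0 x :
  (forall k, (k < n)%nat -> (X k w < K0)%nat) -> (K0 <= x)%nat -> emp_atom n w x = 0.
Proof.
 intros H Hx. unfold emp_atom, emp. rewrite (fsum_ext n _ (fun _ => 0)), fsum_const; [ring|].
 intros k Hk. apply indic_false. specialize (H k Hk). lia.
Qed.

Lemma emp_cond_pmfE n w eps x : emp_cond_pmf X n w eps x =
  if Rle_dec eps (emp_atom n w x) then emp_atom n w x / emp X n w (Gamma X n w eps) else 0.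
Proof.
 unfold emp_cond_pmf. destruct (Rle_dec eps (emp_atom n w x)) as [H|H].
 - f_equal. apply emp_ext. intros y; split; [intros []; auto|].
   intros Hy; subst y; split; auto; unfold Gamma; fold (emp_atom n w x); lra.
 - rewrite (emp_ext _ _ _ (fun _ => False)), emp_false. unfold Rdiv; ring.
   intros y; split; [intros [-> Hg]; unfold Gamma in Hg; fold (emp_atom n w x) in Hg; lra|tauto].
Qed.

Lemma indic_Gamma n w eps x :
  indic (Gamma X n w eps) x = if Rle_dec eps (emp_atom n w x) then 1 else 0.
Proof. unfold Gamma. destruct Rle_dec; [apply indic_true|apply indic_false]; fold (emp_atom n w x); lra. Qed.

Definition window n m w : nat -> nat :=
  fun k => if Nat.ltb k m then X (n + k)%nat w else 0%nat.

Lemma window_0 n w : window n 0 w = fun _ => 0%nat.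
Proof. apply functional_extensionality; intros k; unfold window; destruct k; reflexivity. Qed.

Lemma window_S n m w : window n (S m) w = consn (X n w) (window (S n) m w).
Proof.
 apply functional_extensionality; intros [|k]; unfold window, consn.
 - change (Nat.ltb 0 (S m)) with true. cbv iota. rewrite Nat.add_0_r; auto.
 - change (Nat.ltb (S k) (S m)) with (Nat.ltb k m). destruct (Nat.ltb k m); auto. f_equal; lia.
Qed.

Lemma emp_window n w A : emp X n w A = / INR n * count_in A n (window 0 n w).
Proof.
 unfold emp, count_in. f_equal. apply fsum_ext. intros k Hk. unfold window.
 destruct (Nat.ltb_spec k n); [reflexivity|lia].
Qed.

Variable f : nat -> R.
Hypothesis hX : iid_with_law F P X f.

Let prefix_is n xs w := forall k, (k < n)%nat -> X k w = xs k.

Let window_law_at m := forall n xs Rp,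
  F (fun w => prefix_is n xs w /\ Rp (window n m w)) /\
  P (fun w => prefix_is n xs w /\ Rp (window n m w)) = fprod n (fun k => f (xs k)) * prod_law f m Rp.

Lemma window_law_0 : window_law_at 0.
Proof.
 destruct hX as [hX1 hX2]. intros n xs Rp.
 assert (HF : F (prefix_is n xs)) by (apply (event_forall_lt (fun k w => X k w = xs k)); intros; apply hX1).
 simpl prod_law. unfold indic. destruct (excluded_middle_informative (Rp (fun _ => 0%nat))) as [H|H].
 - split; [eapply event_ext; [|exact HF]|].
   + intros w; rewrite window_0; tauto.
   + rewrite (prob_ext _ (prefix_is n xs)); [unfold prefix_is; rewrite hX2; lra|].
     intros w; rewrite window_0; tauto.
 - split; [eapply event_ext; [|apply event_false]|].
   + intros w; rewrite window_0; tauto.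
   + rewrite (prob_ext _ (fun _ => False)); [rewrite prob_false; lra|]. intros w; rewrite window_0; tauto.
Qed.

(* Conditioning on the value [x] of [X_n] splits the event into a disjoint
   countable union, whose terms are described by [window_law_at m]. *)
Lemma window_law_step m : window_law_at m -> forall n xs Rp,
  F (fun w => prefix_is n xs w /\ Rp (window n (S m) w)) /\
  has_sum (fun x => fprod n (fun k => f (xs k)) * (f x * prod_law f m (fun ys => Rp (consn x ys))))
      (P (fun w => prefix_is n xs w /\ Rp (window n (S m) w))).
Proof.
 intros IH n xs Rp.
 set (E := fun x w => prefix_is (S n) (upd xs n x) w /\ Rp (consn x (window (S n) m w))).
 assert (HE : forall w, (prefix_is n xs w /\ Rp (window n (S m) w)) <-> exists x, E x w).
 { intros w; rewrite window_S; unfold E, prefix_is, upd; split.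
   - intros [H1 H2]; exists (X n w); split; auto.
     intros k Hk. destruct (Nat.eqb_spec k n); subst; auto. apply H1; lia.
   - intros [x [H1 H2]]. assert (Hx : X n w = x) by (rewrite H1 by lia; rewrite Nat.eqb_refl; auto). subst x.
     split; auto. intros k Hk. rewrite H1 by lia. destruct (Nat.eqb_spec k n); auto; lia. }
 assert (HFE : forall x, F (E x)) by (intros x; apply (IH (S n) (upd xs n x) (fun ys => Rp (consn x ys)))).
 split.
 - eapply event_ext; [intros w; symmetry; apply HE|]. apply (event_exists E HFE).
 - rewrite (prob_ext _ _ HE). eapply has_sum_ext; [|apply (prob_has_sum E HFE)].
   + intros x. destruct (IH (S n) (upd xs n x) (fun ys => Rp (consn x ys))) as [_ HP].
     unfold E; cbv beta. rewrite HP. simpl fprod.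
     rewrite (fprod_ext n _ (fun k => f (xs k))).
     * unfold upd; rewrite Nat.eqb_refl; ring.
     * intros k Hk; unfold upd; destruct (Nat.eqb_spec k n); auto; lia.
   + intros x y w Hxy [H1 _] [H2 _]. apply Hxy.
     pose proof (H1 n ltac:(lia)); pose proof (H2 n ltac:(lia)).
     unfold upd in *; rewrite Nat.eqb_refl in *; congruence.
Qed.

Lemma window_law m : window_law_at m.
Proof.
 induction m; [apply window_law_0|].
 intros n xs Rp. destruct (window_law_step m IHm n xs Rp) as [HF Hc]. split; auto.
 set (c := fprod n (fun k => f (xs k))) in *. simpl prod_law.
 destruct (Req_dec c 0) as [Hc0|Hc0].
 - rewrite Hc0, Rmult_0_l. eapply has_sum_unique; [exact Hc|].
   eapply has_sum_ext; [|apply has_sum_0]. intros; simpl; rewrite Hc0; ring.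
 - pose proof (has_sum_scal _ _ (/ c) Hc) as H2.
   erewrite series_value_has_sum; [|eapply has_sum_ext; [|exact H2]; intros x; simpl; field; auto].
   field; auto.
Qed.

Lemma prod_law_has_sum m Rp :
  has_sum (fun x => f x * prod_law f m (fun ys => Rp (consn x ys))) (prod_law f (S m) Rp).
Proof.
 destruct (window_law_step m (window_law m) 0%nat (fun _ => 0%nat) Rp) as [_ Hc].
 destruct (window_law (S m) 0%nat (fun _ => 0%nat) Rp) as [_ HP]. rewrite HP in Hc. simpl fprod in Hc.
 eapply has_sum_ext; [|rewrite <- (Rmult_1_l (prod_law f (S m) Rp)); exact Hc]. intros; simpl; ring.
Qed.

Lemma window_event m Rp :
  F (fun w => Rp (window 0 m w)) /\ P (fun w => Rp (window 0 m w)) = prod_law f m Rp.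
Proof.
 destruct (window_law m 0%nat (fun _ => 0%nat) Rp) as [H1 H2]. simpl fprod in H2.
 assert (He : forall w, (prefix_is 0 (fun _ => 0%nat) w /\ Rp (window 0 m w)) <-> Rp (window 0 m w)).
 { intros; split; [tauto|intros; split; auto; intros k Hk; lia]. }
 split; [eapply event_ext; [exact He|exact H1]|]. rewrite <- (prob_ext _ _ He), H2; ring.
Qed.

Hypothesis hf0 : forall x, 0 <= f x.
Hypothesis hf1 : has_sum f 1.

Lemma prod_law_count_ge_le (A : nat -> Prop) (lam K : R) :
  has_sum (fun x => f x * exp (lam * indic A x)) K ->
  forall m c, prod_law f m (fun ys => c <= lam * count_in A m ys) <= exp (- c) * K ^ m.
Proof.
 intros HK m. induction m; intros c.
 - simpl. unfold indic at 1. destruct excluded_middle_informative as [H|H].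
   + unfold count_in in H; simpl in H. assert (1 <= exp (-c)); [|lra].
     rewrite <- exp_0. apply exp_le_mono. lra.
   + pose proof (exp_pos (-c)); lra.
 - replace (exp (- c) * K ^ S m) with (exp (- c) * K ^ m * K) by (simpl; ring).
   eapply has_sum_le; [apply prod_law_has_sum| apply (has_sum_scal _ _ (exp (- c) * K ^ m) HK)|].
   intros x. simpl.
   rewrite (prod_law_ext f m _ (fun ys => c - lam * indic A x <= lam * count_in A m ys))
     by (intros ys; rewrite count_in_consn; lra).
   specialize (IHm (c - lam * indic A x)).
   replace (exp (- c) * K ^ m * (f x * exp (lam * indic A x)))
     with (f x * (exp (- (c - lam * indic A x)) * K ^ m)).
   + apply Rmult_le_compat_l; auto.
   + replace (- (c - lam * indic A x)) with (- c + lam * indic A x) by ring. rewrite exp_plus; ring.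
Qed.

Lemma has_sum_exp_indic (A : nat -> Prop) p lam : has_sum (fun x => f x * indic A x) p ->
  has_sum (fun x => f x * exp (lam * indic A x)) (1 + (exp lam - 1) * p).
Proof.
 intros Hp. eapply has_sum_ext; [|apply (has_sum_plus _ _ _ _ hf1 (has_sum_scal _ _ (exp lam - 1) Hp))].
 intros x; simpl. destruct (indic_01 A x) as [-> | ->].
 - replace (lam * 0) with 0 by ring. rewrite exp_0; ring.
 - rewrite !Rmult_1_r; ring.
Qed.

Lemma has_sum_indic_bounds (A : nat -> Prop) p : has_sum (fun x => f x * indic A x) p -> 0 <= p <= 1.
Proof.
 intros Hp. split.
 - apply (has_sum_le _ _ 0 p has_sum_0 Hp). intros; apply Rmult_le_pos; [auto|apply indic_bounds].
 - apply (has_sum_le _ f p 1 Hp hf1). intros k. pose proof (indic_bounds A k); pose proof (hf0 k); nra.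
Qed.

(* Chernoff's bound at [lam = t / 4], using [exp lam <= 1 + lam + 2 lam^2]. *)
Lemma prod_law_count_ge (A : nat -> Prop) p t n : has_sum (fun x => f x * indic A x) p -> 0 < t <= 1 ->
  prod_law f n (fun ys => INR n * (p + t) <= count_in A n ys) <= exp (- (INR n * t ^ 2) / 8).
Proof.
 intros Hp Ht. pose proof (has_sum_indic_bounds A p Hp). pose proof (pos_INR n).
 set (lam := t / 4).
 rewrite (prod_law_ext f n _ (fun ys => lam * (INR n * (p + t)) <= lam * count_in A n ys)).
 2:{ intros ys; split; intros; [apply Rmult_le_compat_l|apply (Rmult_le_reg_l lam)]; unfold lam in *; lra. }
 eapply Rle_trans; [apply (prod_law_count_ge_le A lam _ (has_sum_exp_indic A p lam Hp))|].
 assert (0 <= exp lam - 1) by (pose proof (exp_ineq1_le lam); unfold lam in *; lra).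
 eapply Rle_trans.
 { apply Rmult_le_compat_l; [left; apply exp_pos|]. apply (pow_le_exp ((exp lam - 1) * p)). nra. }
 rewrite <- exp_plus. apply exp_le_mono. pose proof (exp_le_quadratic lam ltac:(unfold lam; lra)).
 assert (INR n * (p * (exp lam - 1 - lam - 2 * lam ^ 2)) <= 0).
 { assert (p * (exp lam - 1 - lam - 2 * lam ^ 2) <= 0) by nra. nra. }
 assert (INR n * (2 * lam ^ 2 * (p - 1)) <= 0).
 { assert (2 * lam ^ 2 * (p - 1) <= 0) by (unfold lam; nra). nra. }
 unfold lam in *. nra.
Qed.

Lemma prod_law_count_le (A : nat -> Prop) p t n : has_sum (fun x => f x * indic A x) p -> 0 < t <= 1 ->
  prod_law f n (fun ys => count_in A n ys <= INR n * (p - t)) <= exp (- (INR n * t ^ 2) / 8).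
Proof.
 intros Hp Ht. pose proof (has_sum_indic_bounds A p Hp). pose proof (pos_INR n).
 set (lam := t / 4).
 rewrite (prod_law_ext f n _ (fun ys => - lam * (INR n * (p - t)) <= - lam * count_in A n ys)).
 2:{ intros ys; split; intros; [apply Rmult_le_compat_neg_l|apply (Rmult_le_reg_l lam)]; unfold lam in *; lra. }
 eapply Rle_trans; [apply (prod_law_count_ge_le A (- lam) _ (has_sum_exp_indic A p (- lam) Hp))|].
 assert (0 <= exp (- lam)) by (left; apply exp_pos).
 eapply Rle_trans.
 { apply Rmult_le_compat_l; [left; apply exp_pos|]. apply (pow_le_exp ((exp (- lam) - 1) * p)). nra. }
 rewrite <- exp_plus. apply exp_le_mono. pose proof (exp_opp_le_quadratic lam ltac:(unfold lam; lra)).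
 assert (INR n * (p * (exp (- lam) - 1 + lam - lam ^ 2)) <= 0).
 { assert (p * (exp (- lam) - 1 + lam - lam ^ 2) <= 0) by nra. nra. }
 assert (INR n * (lam ^ 2 * (p - 1)) <= 0).
 { assert (lam ^ 2 * (p - 1) <= 0) by (unfold lam; nra). nra. }
 unfold lam in *. nra.
Qed.

Lemma emp_deviation_prob (A : nat -> Prop) p t n :
  has_sum (fun x => f x * indic A x) p -> 0 < t <= 1 -> (1 <= n)%nat ->
  F (fun w => t < Rabs (emp X n w A - p)) /\
  P (fun w => t < Rabs (emp X n w A - p)) <= 2 * exp (- (INR n * t ^ 2) / 8).
Proof.
 intros Hp Ht Hn. assert (HnR : 1 <= INR n) by (apply (le_INR 1); auto).
 set (U := fun ys => INR n * (p + t) <= count_in A n ys).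
 set (L := fun ys => count_in A n ys <= INR n * (p - t)).
 assert (He : forall w, t < Rabs (emp X n w A - p) <-> t < Rabs (/ INR n * count_in A n (window 0 n w) - p))
   by (intros w; rewrite emp_window; reflexivity).
 destruct (window_event n (fun ys => t < Rabs (/ INR n * count_in A n ys - p))) as [HFb _].
 destruct (window_event n U) as [HFU HPU].
 destruct (window_event n L) as [HFL HPL].
 split; [eapply event_ext; [intros w; symmetry; apply He|exact HFb]|].
 rewrite (prob_ext _ _ He).
 eapply Rle_trans.
 { apply (prob_le _ (fun w => U (window 0 n w) \/ L (window 0 n w)) HFb (event_or _ _ HFU HFL)).
   intros w Hw. set (c := count_in A n (window 0 n w)) in *. unfold U, L. fold c.
   assert (Hc : c = INR n * (/ INR n * c)) by (field; lra).
   destruct (Rcase_abs (/ INR n * c - p)) as [Hneg|Hpos];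
     [rewrite Rabs_left in Hw by lra|rewrite Rabs_right in Hw by lra].
   - right. nra.
   - left. nra. }
 eapply Rle_trans; [apply (prob_or_le _ _ HFU HFL)|]. rewrite HPU, HPL.
 pose proof (prod_law_count_ge A p t n Hp Ht). pose proof (prod_law_count_le A p t n Hp Ht).
 unfold U, L. lra.
Qed.

Definition tail_mass M := series_value (fun x => f x * indic (fun y => (M <= y)%nat) x).

Definition bad_sample n M t w :=
  (exists x, (x < M)%nat /\ t < Rabs (emp_atom n w x - f x)) \/
  t < Rabs (emp X n w (fun y => (M <= y)%nat) - tail_mass M).

Lemma has_sum_tail_mass M : has_sum (fun x => f x * indic (fun y => (M <= y)%nat) x) (tail_mass M).
Proof.
 destruct (has_sum_bounded_ge0 (fun x => f x * indic (fun y => (M <= y)%nat) x) 1) as [l [Hl _]].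
 - intros; apply Rmult_le_pos; [apply hf0|apply indic_bounds].
 - intros K. eapply Rle_trans; [|apply (fsum_le_has_sum f 1 K hf0 hf1)]. apply fsum_le. intros.
   pose proof (indic_bounds (fun y => (M <= y)%nat) k). pose proof (hf0 k). nra.
 - unfold tail_mass. rewrite (series_value_has_sum _ l Hl). auto.
Qed.

Lemma bad_sample_prob n M t : 0 < t <= 1 -> (1 <= n)%nat ->
  F (bad_sample n M t) /\ P (bad_sample n M t) <= 2 * (INR M + 1) * exp (- (INR n * t ^ 2) / 8).
Proof.
 intros Ht Hn. set (c := 2 * exp (- (INR n * t ^ 2) / 8)).
 assert (Hc : 0 <= c) by (unfold c; pose proof (exp_pos (- (INR n * t ^ 2) / 8)); lra).
 set (Cj := fun j => if lt_dec j M then (fun w => t < Rabs (emp_atom n w j - f j))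
                     else if Nat.eq_dec j M then (fun w => t < Rabs (emp X n w (fun y => (M <= y)%nat) - tail_mass M))
                     else (fun _ => False)).
 assert (HC : forall j, F (Cj j) /\ P (Cj j) <= if lt_dec j (S M) then c else 0).
 { intros j. unfold Cj. destruct (lt_dec j M) as [Hj|Hj].
   - destruct (lt_dec j (S M)); [|lia]. apply (emp_deviation_prob _ _ _ _ (has_sum_indic_point f j) Ht Hn).
   - destruct (Nat.eq_dec j M) as [Hj2|Hj2].
     + destruct (lt_dec j (S M)); [|lia]. apply (emp_deviation_prob _ _ _ _ (has_sum_tail_mass M) Ht Hn).
     + split; [apply event_false|]. rewrite prob_false. destruct lt_dec; lra. }
 assert (He : forall w, bad_sample n M t w <-> exists j, Cj j w).
 { intros w; unfold bad_sample, Cj; split.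
   - intros [[x [Hx H]]|H]; [exists x; destruct lt_dec; [auto|lia]|].
     exists M; destruct lt_dec; [lia|destruct Nat.eq_dec; [auto|lia]].
   - intros [j Hj]. destruct (lt_dec j M); [left; eauto|].
     destruct (Nat.eq_dec j M); [right; auto|contradiction]. }
 split.
 - eapply event_ext; [intros w; symmetry; apply He|]. apply (event_exists Cj (fun j => proj1 (HC j))).
 - rewrite (prob_ext _ _ He). apply (prob_exists_le Cj (fun j => if lt_dec j (S M) then c else 0)).
   + intros j; apply (HC j).
   + intros j; apply (HC j).
   + intros J. eapply Rle_trans; [apply fsum_cond_lt; auto|]. rewrite S_INR. unfold c. lra.
Qed.

Lemma entropy_dist_le b g h D : 1 < b ->
  (exists Lg, has_sum (fun x => xlnx (g x)) Lg) -> (exists Lh, has_sum (fun x => xlnx (h x)) Lh) ->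
  (forall K, fsum K (fun x => Rabs (xlnx (g x) - xlnx (h x))) <= D) ->
  Rabs (entropy b g - entropy b h) <= D / ln b.
Proof.
 intros Hb [Lg Hg] [Lh Hh] HD. assert (Hlb : 0 < ln b) by (rewrite <- ln_1; apply ln_increasing; lra).
 rewrite (entropy_has_sum b g _ Hb Hg), (entropy_has_sum b h _ Hb Hh).
 replace (- (Lg / ln b) - - (Lh / ln b)) with ((Lh - Lg) / ln b) by (field; lra).
 unfold Rdiv. rewrite Rabs_mult, (Rabs_right (/ ln b)) by (left; apply Rinv_0_lt_compat; lra).
 apply Rmult_le_compat_r; [left; apply Rinv_0_lt_compat; lra|]. apply Rabs_le. split.
 - assert (Lg - Lh <= D); [|lra]. apply (has_sum_ub _ _ _ (has_sum_minus _ _ _ _ Hg Hh)).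
   intros K. eapply Rle_trans; [apply Rle_abs|]. eapply Rle_trans; [apply fsum_abs|]. apply HD.
 - apply (has_sum_ub _ _ _ (has_sum_minus _ _ _ _ Hh Hg)).
   intros K. eapply Rle_trans; [apply Rle_abs|]. eapply Rle_trans; [apply fsum_abs|].
   eapply Rle_trans; [|apply (HD K)]. right; apply fsum_ext; intros; apply Rabs_minus_sym.
Qed.

Lemma f_le1 x : f x <= 1.
Proof.
 pose proof (fsum_le_has_sum f 1 (S x) hf0 hf1). simpl in H.
 pose proof (fsum_ge0 x f (fun k _ => hf0 k)). lra.
Qed.

(* Below [2 eps] the small-atom bound applies, above it [- f ln f <= f (- ln eps)]. *)
Lemma has_sum_xlnx eps Sphi : 0 < eps -> 2 * eps <= / exp 1 ->
  (forall K, fsum K (fun x => if Rlt_dec (f x) (2 * eps) then - xlnx (f x) else 0) <= Sphi) ->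
  exists L, has_sum (fun x => xlnx (f x)) L.
Proof.
 intros Heps He2 HS. pose proof (opp_ln_small_gt0 eps Heps He2).
 destruct (has_sum_bounded_ge0 (fun x => - xlnx (f x)) (Sphi + - ln eps)) as [l [Hl _]].
 - intros x; pose proof (xlnx_le0 (f x) (conj (hf0 x) (f_le1 x))); lra.
 - intros K. eapply Rle_trans.
   { apply (fsum_le _ _ (fun x => (if Rlt_dec (f x) (2 * eps) then - xlnx (f x) else 0) + - ln eps * f x)).
     intros x _. pose proof (hf0 x). destruct Rlt_dec as [Hs|Hs]; [nra|apply Rnot_lt_le in Hs].
     assert (- xlnx (f x) <= f x * - ln eps) by (apply opp_xlnx_le; [lra|split; [lra|apply f_le1]]). lra. }
   rewrite fsum_plus, fsum_scal. pose proof (HS K). pose proof (fsum_le_has_sum f 1 K hf0 hf1). nra.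
 - exists (- l). replace (- l) with (-1 * l) by ring.
   eapply has_sum_ext; [|apply (has_sum_scal _ _ (-1) Hl)]. intros; simpl; ring.
Qed.

Lemma has_sum_xlnx_emp_cond n w eps : exists L, has_sum (fun x => xlnx (emp_cond_pmf X n w eps x)) L.
Proof.
 destruct (sample_bounded n w) as [K0 HK0].
 exists (fsum K0 (fun x => xlnx (emp_cond_pmf X n w eps x))). apply has_sum_finite.
 intros x Hx. rewrite emp_cond_pmfE, (emp_atom_out n w K0 x HK0 Hx).
 destruct Rle_dec; [unfold Rdiv; rewrite Rmult_0_l|]; apply xlnx_0.
Qed.

Lemma emp_l1_le n w M t : (1 <= n)%nat -> 0 <= t ->
  (forall x, (x < M)%nat -> Rabs (emp_atom n w x - f x) <= t) ->
  Rabs (emp X n w (fun y => (M <= y)%nat) - tail_mass M) <= t ->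
  forall K, fsum K (fun x => Rabs (emp_atom n w x - f x)) <= INR M * t + t + 2 * tail_mass M.
Proof.
 intros Hn Ht Hpt Htl K.
 eapply Rle_trans.
 { apply (fsum_le _ _ (fun x => t * (if lt_dec x M then 1 else 0)
     + (indic (fun y => (M <= y)%nat) x * emp_atom n w x + f x * indic (fun y => (M <= y)%nat) x))).
   intros x _. pose proof (hf0 x). destruct (lt_dec x M) as [Hx|Hx].
   - rewrite indic_false by lia. specialize (Hpt x Hx). lra.
   - rewrite indic_true by lia. pose proof (emp_bounds n w (fun y => y = x) Hn).
     unfold emp_atom. apply Rabs_le; lra. }
 rewrite !fsum_plus, fsum_scal, fsum_emp_atom.
 pose proof (fsum_cond_lt M K 1 ltac:(lra)).
 pose proof (fsum_le_has_sum _ _ K (fun x => Rmult_le_pos _ _ (hf0 x) (proj1 (indic_bounds _ x))) (has_sum_tail_mass M)).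
 pose proof (emp_le n w (fun y => (y < K)%nat /\ (M <= y)%nat) (fun y => (M <= y)%nat) ltac:(intros y []; auto)).
 apply Rabs_le_between in Htl. nra.
Qed.

Lemma fsum_Gamma_le n w eps K :
  fsum K (fun x => if Rle_dec eps (emp_atom n w x) then emp_atom n w x else 0) <= emp X n w (Gamma X n w eps).
Proof.
 rewrite (fsum_ext K _ (fun x => indic (Gamma X n w eps) x * emp_atom n w x)).
 - rewrite fsum_emp_atom. apply emp_le. intros y [_ Hy]; exact Hy.
 - intros x _. rewrite indic_Gamma. destruct Rle_dec; ring.
Qed.

(* An atom with empirical mass below [eps] either is itself below [2 eps], or
   is off by at least half its mass. *)
Lemma emp_Gamma_ge n w eps dl S : (1 <= n)%nat ->
  (forall K, fsum K (fun x => Rabs (emp_atom n w x - f x)) <= dl) ->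
  (forall K, fsum K (fun x => if Rlt_dec (f x) (2 * eps) then f x else 0) <= S) ->
  1 - emp X n w (Gamma X n w eps) <= 3 * dl + S.
Proof.
 intros Hn Hdl HS. destruct (sample_bounded n w) as [K0 HK0].
 pose proof (emp_not n w (Gamma X n w eps) Hn) as H.
 rewrite <- (emp_restrict n w (fun y => ~ Gamma X n w eps y) K0 K0 HK0 (le_n _)), <- fsum_emp_atom in H.
 assert (fsum K0 (fun x => indic (fun y => ~ Gamma X n w eps y) x * emp_atom n w x) <=
         fsum K0 (fun x => 3 * Rabs (emp_atom n w x - f x) + (if Rlt_dec (f x) (2 * eps) then f x else 0))).
 { apply fsum_le; intros x _. pose proof (Rabs_pos (emp_atom n w x - f x)).
   pose proof (emp_bounds n w (fun y => y = x) Hn). fold (emp_atom n w x) in H1. pose proof (hf0 x).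
   replace (indic (fun y => ~ Gamma X n w eps y) x) with (1 - indic (Gamma X n w eps) x)
     by (unfold indic; do 2 destruct excluded_middle_informative; solve [contradiction | lra]).
   rewrite indic_Gamma. destruct (Rle_dec eps (emp_atom n w x)).
   - destruct Rlt_dec; lra.
   - destruct Rlt_dec.
     + pose proof (Rle_abs (emp_atom n w x - f x)). lra.
     + rewrite Rabs_left by lra. lra. }
 rewrite fsum_plus, fsum_scal in H0. pose proof (Hdl K0). pose proof (HS K0). lra.
Qed.

Lemma entropy_emp_cond_error n w b eps t M A1 A2 A3 :
  1 < b -> (1 <= n)%nat -> 0 < eps -> 2 * eps <= / exp 1 -> (6 + A3) * eps <= 1/2 ->
  (forall K, fsum K (fun x => if Rlt_dec (f x) (2 * eps) then f x else 0) <= A3 * eps) ->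
  (forall K, fsum K (fun x => if Rlt_dec (f x) (2 * eps) then - xlnx (f x) else 0) <= eps * (A1 * (- ln eps) + A2)) ->
  tail_mass M <= eps / 2 -> 0 <= t -> INR M * t + t <= eps ->
  ~ bad_sample n M t w ->
  Rabs (entropy b f - entropy b (emp_cond_pmf X n w eps)) <=
    eps * (6 * (1 + ln 2 + - ln eps) + (- ln eps + 2) * (6 + A3) + A1 * (- ln eps) + A2) / ln b.
Proof.
 intros Hb Hn Heps He2 HA3 HS1 HSp HpT Ht HMt Hgood. pose proof (opp_ln_small_gt0 eps Heps He2).
 assert (HpT0 : 0 <= tail_mass M).
 { apply (has_sum_le (fun _ => 0) _ 0 _ has_sum_0 (has_sum_tail_mass M)).
   intros; apply Rmult_le_pos; [apply hf0|apply indic_bounds]. }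
 set (e := emp_atom n w). set (Z := emp X n w (Gamma X n w eps)).
 assert (Hdl : forall K, fsum K (fun x => Rabs (e x - f x)) <= 2 * eps).
 { intros K. eapply Rle_trans; [apply (emp_l1_le n w M t Hn Ht)|lra].
   - intros x Hx. apply Rnot_lt_le. intros Hc. apply Hgood. left. exists x; auto.
   - apply Rnot_lt_le. intros Hc. apply Hgood. right; auto. }
 pose proof (emp_Gamma_ge n w eps (2 * eps) (A3 * eps) Hn Hdl HS1).
 assert (HZ : 1/2 <= Z <= 1) by (split; [unfold Z; lra|apply emp_bounds; auto]).
 eapply Rle_trans.
 { apply (entropy_dist_le b f _ (3 * (1 + ln 2 + - ln eps) * (2 * eps) + (- ln eps + 2) * (1 - Z)
                                  + eps * (A1 * (- ln eps) + A2)) Hb (has_sum_xlnx _ _ Heps He2 HSp) (has_sum_xlnx_emp_cond n w eps)).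
   intros K. rewrite (fsum_ext K _ (fun x => Rabs (xlnx (f x) - xlnx (if Rle_dec eps (e x) then e x / Z else 0))))
     by (intros; rewrite emp_cond_pmfE; reflexivity).
   apply (fsum_xlnx_cond_dist_le f e Z eps); auto.
   - intros x; split; [apply hf0|apply f_le1].
   - intros; apply emp_bounds; auto.
   - intros K'; apply fsum_Gamma_le. }
 assert (Hlb : 0 < ln b) by (rewrite <- ln_1; apply ln_increasing; lra).
 unfold Rdiv. apply Rmult_le_compat_r; [left; apply Rinv_0_lt_compat; lra|].
 assert ((- ln eps + 2) * (1 - Z) <= (- ln eps + 2) * ((6 + A3) * eps)) by (apply Rmult_le_compat_l; unfold Z; lra).
 nra.
Qed.

Lemma eventually_good_sample (M : nat -> nat) (t : nat -> R) n2 Cs : (1 <= n2)%nat ->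
  (forall n, (n2 <= n)%nat -> 0 < t n <= 1 /\
     2 * (INR (M n) + 1) * exp (- (INR n * t n ^ 2) / 8) <= Cs * / (INR n * INR (n + 1))) ->
  exists E, F E /\ P E = 1 /\
    forall w, E w -> exists n0, forall n, (n0 <= n)%nat -> ~ bad_sample n (M n) (t n) w.
Proof.
 intros Hn2 Hrate.
 set (B := fun n => if le_dec n2 n then bad_sample n (M n) (t n) else fun _ => False).
 destruct (borel_cantelli B Cs n2) as [HFE HPE]; auto.
 - intros n; unfold B; destruct le_dec as [Hn|Hn]; [|apply event_false].
   apply bad_sample_prob; [apply Hrate, Hn|lia].
 - intros n Hn. unfold B; destruct le_dec; [|lia].
   eapply Rle_trans; [apply bad_sample_prob; [apply Hrate, Hn|lia]|apply Hrate, Hn].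
 - eexists; split; [exact HFE|split; [exact HPE|]].
   intros w [n0 Hw]. exists (max n0 n2). intros n Hn.
   specialize (Hw n ltac:(lia)). unfold B in Hw. destruct le_dec; [exact Hw|lia].
Qed.

End ProbabilitySpace.

Lemma error_bound_le_rate b eps u tau A1 A2 A3 : 1 < b -> 0 <= A1 -> 0 <= A2 -> 0 <= A3 ->
  0 < eps -> - ln eps = tau * u -> 1 <= tau * u ->
  eps * (6 * (1 + ln 2 + - ln eps) + (- ln eps + 2) * (6 + A3) + A1 * (- ln eps) + A2) / ln b <=
    tau * (6 * (2 + ln 2) + 3 * (6 + A3) + A1 + A2) * (eps * (u / ln b)).
Proof.
 intros Hb HA1 HA2 HA3 Heps HL HLam. rewrite HL. pose proof ln2_gt0.
 assert (Hlb : 0 < ln b) by (rewrite <- ln_1; apply ln_increasing; lra).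
 set (Lam := tau * u) in *.
 replace (tau * (6 * (2 + ln 2) + 3 * (6 + A3) + A1 + A2) * (eps * (u / ln b)))
   with (eps * (Lam * (6 * (2 + ln 2) + 3 * (6 + A3) + A1 + A2)) / ln b) by (unfold Lam; field; lra).
 unfold Rdiv. apply Rmult_le_compat_r; [left; apply Rinv_0_lt_compat; lra|].
 apply Rmult_le_compat_l; [lra|nra].
Qed.

Lemma entropy_rate_on_good_samples b f alpha k0 k1 N0 tau : 1 < b ->
  (forall x, 0 <= f x) -> has_sum f 1 -> 0 < alpha -> 0 < k0 -> k0 <= k1 ->
  (forall x, (N0 <= x)%nat -> k0 * exp (- alpha * INR x) <= f x <= k1 * exp (- alpha * INR x)) ->
  0 < tau < 1 / 2 ->
  exists (C : R) (M : nat -> nat) (t : nat -> R) (n2 : nat) (Cs : R), (1 <= n2)%nat /\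
    (forall n, (n2 <= n)%nat -> 0 < t n <= 1 /\
       2 * (INR (M n) + 1) * exp (- (INR n * t n ^ 2) / 8) <= Cs * / (INR n * INR (n + 1))) /\
    forall (Omega : Type) (X : nat -> Omega -> nat) w n, (n2 <= n)%nat -> ~ bad_sample Omega X f n (M n) (t n) w ->
      Rabs (entropy b f - entropy b (emp_cond_pmf X n w (Rpower (INR n) (- tau))))
        <= C * (Rpower (INR n) (- tau) * logb b (INR n)).
Proof.
 intros hb hf0 hf1 halpha Hk0 Hk01 Hfb htau.
 assert (hf : forall x, 0 <= f x <= 1) by (intros x; split; [apply hf0|apply (f_le1 f hf0 hf1)]).
 destruct (small_atoms_mass_le f alpha k0 k1 N0 hf halpha Hk0 ltac:(lra) Hfb) as [A3 [HA3 HS1]].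
 destruct (small_atoms_xlnx_le f alpha k0 k1 N0 hf halpha Hk0 ltac:(lra) Hfb) as [A1 [A2 [HA1 [HA2 HSp]]]].
 destruct (tail_cutoff f alpha k0 k1 N0 hf halpha ltac:(lra) Hfb) as [c1 [M [Hc1 HM]]].
 set (a0 := INR N0 + c1 / alpha + 2). set (a1 := tau / alpha).
 assert (Hinv : 0 < / alpha) by (apply Rinv_0_lt_compat; lra).
 assert (Ha0 : 0 <= a0) by (unfold a0, Rdiv; pose proof (pos_INR N0); nra).
 assert (Ha1 : 0 <= a1) by (unfold a1, Rdiv; nra).
 destruct (sample_rates tau a0 a1 (6 + A3) htau Ha0 Ha1 ltac:(lra)) as [t [n2 [Cs [Hn2 Hrates]]]].
 set (Mn := fun n : nat => M (tau * ln (INR n))).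
 assert (HMn : forall n, (n2 <= n)%nat -> INR (Mn n) + 1 <= a0 + a1 * ln (INR n)).
 { intros n Hn. destruct (Hrates n Hn) as [HL _]. destruct (HM (tau * ln (INR n)) ltac:(lra)) as [HMle _].
   unfold Mn, a0, a1. replace ((tau * ln (INR n) + c1) / alpha) with (c1 / alpha + tau / alpha * ln (INR n)) in HMle
     by (field; lra). lra. }
 exists (tau * (6 * (2 + ln 2) + 3 * (6 + A3) + A1 + A2)), Mn, t, n2, Cs. split; [exact Hn2|split].
 { intros n Hn. destruct (Hrates n Hn) as [_ [_ [_ [Ht [_ Hdev]]]]]. split; [auto|].
   eapply Rle_trans; [|exact Hdev]. pose proof (exp_pos (- (INR n * t n ^ 2) / 8)). pose proof (HMn n Hn). nra. }
 intros Omega X w n Hn Hgood.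
 destruct (Hrates n Hn) as [HLam [He2 [HA3e [Ht [HMt _]]]]]. pose proof (HMn n Hn).
 set (eps := Rpower (INR n) (- tau)) in *.
 assert (Heps : 0 < eps) by apply Rpower_gt0.
 assert (HL : - ln eps = tau * ln (INR n)) by (unfold eps; rewrite ln_Rpower; ring).
 assert (HpT : tail_mass f (Mn n) <= eps / 2).
 { replace eps with (exp (- (tau * ln (INR n)))) by (unfold eps, Rpower; f_equal; ring).
   apply (has_sum_ub _ _ _ (has_sum_tail_mass f hf0 hf1 (Mn n))). apply HM. lra. }
 eapply Rle_trans; [|apply error_bound_le_rate; auto].
 apply (entropy_emp_cond_error Omega X f hf0 hf1 n w b eps (t n) (Mn n) A1 A2 A3 hb ltac:(lia) Heps He2 HA3e
   (HS1 eps Heps He2) (HSp eps Heps He2) HpT ltac:(lra) ltac:(nra) Hgood).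
Qed.

Theorem theorem6
  (b : R) (hb : 1 < b)
  (f : nat -> R) (hf : is_pmf_pos f)
  (alpha : R) (halpha : 0 < alpha)
  (htail : exists k0 k1 N : R, 0 < k0 /\ k0 <= k1 /\ 0 < N /\
             forall x : nat, N <= INR x ->
               k0 * exp (- alpha * INR x) <= f x /\ f x <= k1 * exp (- alpha * INR x))
  (tau : R) (htau : 0 < tau < 1 / 2)
  (Omega : Type) (F : (Omega -> Prop) -> Prop) (P : (Omega -> Prop) -> R)
  (hP : is_prob_space F P)
  (X : nat -> Omega -> nat) (hX : iid_with_law F P X f) :
  exists E : Omega -> Prop, F E /\ P E = 1 /\
    forall w, E w ->
      exists (C : R) (n0 : nat), forall n : nat, (n0 <= n)%nat ->
        Rabs (entropy b f - entropy b (emp_cond_pmf X n w (Rpower (INR n) (- tau))))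
          <= C * (Rpower (INR n) (- tau) * logb b (INR n)).
Proof.
 destruct hf as [_ [hf0 hf1]]. apply infinite_sum_has_sum in hf1.
 destruct htail as [k0 [k1 [N [Hk0 [Hk01 [_ Hbd]]]]]].
 destruct (nat_gt 0 N) as [N0 [_ HN0]].
 destruct (entropy_rate_on_good_samples b f alpha k0 k1 N0 tau hb hf0 hf1 halpha Hk0 Hk01)
   as [C [M [t [n2 [Cs [Hn2 [Hrare Hgood]]]]]]]; [|exact htau|].
 { intros x Hx. apply Hbd. apply le_INR in Hx. lra. }
 destruct (eventually_good_sample Omega F P hP X f hX hf0 hf1 M t n2 Cs Hn2 Hrare) as [E [HFE [HPE HE]]].
 exists E. split; [exact HFE|split; [exact HPE|]].
 intros w Hw. destruct (HE w Hw) as [n0 Hn0].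
 exists C, (max n0 n2). intros n Hn. apply Hgood; [lia|apply Hn0; lia].
Qed.
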